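(* Let $0<\beta<2$, $d\in\mathbb{N}$, $\kappa\in\mathbb{R}$ and $N\in(0,\infty)$. Suppose that \[\frac1N(\mathcal{L}u(x))^2\le \Gamma_2(u)(x)+\kappa\,\Gamma(u)(x)\] holds for all $u\in C_c^\infty(\mathbb{R}^d)$ and all $x\in\mathbb{R}^d$ (i.e. $\mathcal{L}$ satisfies $CD(\kappa,N)$). Then \[\frac1N(\mathcal{L}u(x))^2\le \Gamma_2(u)(x)\] for all $u\in C_c^\infty(\mathbb{R}^d)$ and all $x\in\mathbb{R}^d$, i.e. $\mathcal{L}$ satisfies $CD(0,N)$.
   Context: $c_{\beta,d}=\frac{2^\beta\Gamma(\frac{d+\beta}{2})}{\pi^{d/2}|\Gamma(-\frac{\beta}{2})|}$; $\mathcal{L}u(x)=c_{\beta,d}\int_{\mathbb{R}^d}\frac{u(x+h)-2u(x)+u(x-h)}{|h|^{d+\beta}}dh$; $\Gamma(u)(x)=c_{\beta,d}\int_{\mathbb{R}^d}\frac{(u(x+h)-u(x))^2}{|h|^{d+\beta}}dh$; $\Gamma_2(u)(x)=c_{\beta,d}^2\int_{\mathbb{R}^d}\int_{\mathbb{R}^d}\frac{[u(x+h+\sigma)-u(x+h)-u(x+\sigma)+u(x)]^2}{|h|^{d+\beta}|\sigma|^{d+\beta}}dh\,d\sigma$. *)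

From Stdlib Require Import Reals Lra List Classical ClassicalEpsilon.
Open Scope R_scope.

(* Points of R^d are encoded as  v : nat -> R  of which only the
   coordinates 0 .. d-1 are relevant. Functions on R^d are functions
   (nat -> R) -> R that depend only on the first d coordinates. *)

Definition vadd (x h : nat -> R) : nat -> R := fun i => x i + h i.
Definition vsub (x h : nat -> R) : nat -> R := fun i => x i - h i.

Fixpoint sum_upto (d : nat) (f : nat -> R) : R :=
  match d with O => 0 | S k => sum_upto k f + f k end.
Fixpoint prod_upto (d : nat) (f : nat -> R) : R :=
  match d with O => 1 | S k => prod_upto k f * f k end.

Definition vnorm (d : nat) (h : nat -> R) : R :=
  sqrt (sum_upto d (fun i => h i ^ 2)).

(* defined as the supremum of the integrals of nonnegative step functions
   (finite sums of multiples of indicators of closed boxes) lying below f. *)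

Definition Rleb (a b : R) : bool := if Rle_dec a b then true else false.

Fixpoint in_boxb (d : nat) (a b x : nat -> R) : bool :=
  match d with
  | O => true
  | S k => in_boxb k a b x && Rleb (a k) (x k) && Rleb (x k) (b k)
  end.

Definition box_vol (d : nat) (a b : nat -> R) : R :=
  prod_upto d (fun i => b i - a i).

Definition step := (R * (nat -> R) * (nat -> R))%type.

Fixpoint step_val (d : nat) (l : list step) (x : nat -> R) : R :=
  match l with
  | nil => 0
  | (c, a, b) :: l' => (if in_boxb d a b x then c else 0) + step_val d l' x
  end.

Fixpoint step_int (d : nat) (l : list step) : R :=
  match l with
  | nil => 0
  | (c, a, b) :: l' => c * box_vol d a b + step_int d l'
  end.

Definition step_ok (d : nat) (f : (nat -> R) -> R) (l : list step) : Prop :=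
  Forall (fun p : step => let '(c, a, b) := p in
            0 <= c /\ forall i, (i < d)%nat -> a i <= b i) l
  /\ forall x, step_val d l x <= f x.

Definition lower_sums (d : nat) (f : (nat -> R) -> R) : R -> Prop :=
  fun v => exists l, step_ok d f l /\ v = step_int d l.

Definition lint (d : nat) (f : (nat -> R) -> R) : R :=
  epsilon (inhabits 0) (fun v => is_lub (lower_sums d f) v).

Definition Rint (d : nat) (f : (nat -> R) -> R) : R :=
  lint d (fun h => Rmax (f h) 0) - lint d (fun h => Rmax (- f h) 0).

Definition Gamma_pos (s : R) : R :=
  lint 1 (fun v => if Rlt_dec 0 (v 0%nat)
                   then Rpower (v 0%nat) (s - 1) * exp (- v 0%nat) else 0).

(* Gamma on (0,oo) and, via Gamma(s) = Gamma(s+1)/s, on (-1,0) *)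
Definition EGamma (s : R) : R :=
  if Rlt_dec 0 s then Gamma_pos s else Gamma_pos (s + 1) / s.

Definition cbd (beta : R) (d : nat) : R :=
  Rpower 2 beta * EGamma ((INR d + beta) / 2)
  / (Rpower PI (INR d / 2) * Rabs (EGamma (- beta / 2))).

Definition depends_first (d : nat) (u : (nat -> R) -> R) : Prop :=
  forall x y, (forall i, (i < d)%nat -> x i = y i) -> u x = u y.

Definition contd (d : nat) (u : (nat -> R) -> R) : Prop :=
  forall x eps, 0 < eps -> exists del, 0 < del /\
    forall y, vnorm d (vsub y x) < del -> Rabs (u y - u x) < eps.

Definition setc (x : nat -> R) (i : nat) (t : R) : nat -> R :=
  fun j => if Nat.eqb j i then t else x j.

Fixpoint Cn (d n : nat) (u : (nat -> R) -> R) : Prop :=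
  contd d u /\
  match n with
  | O => True
  | S m => exists Du : nat -> (nat -> R) -> R,
      (forall i x, (i < d)%nat ->
         derivable_pt_lim (fun t => u (setc x i t)) (x i) (Du i x))
      /\ forall i, (i < d)%nat -> Cn d m (Du i)
  end.

Definition Ccinf (d : nat) (u : (nat -> R) -> R) : Prop :=
  depends_first d u /\ (forall n, Cn d n u) /\
  exists R0, forall x, R0 < vnorm d x -> u x = 0.

Definition Lop (d : nat) (beta : R) (u : (nat -> R) -> R) (x : nat -> R) : R :=
  cbd beta d * Rint d (fun h =>
    (u (vadd x h) - 2 * u x + u (vsub x h)) / Rpower (vnorm d h) (INR d + beta)).

Definition GammaOp (d : nat) (beta : R) (u : (nat -> R) -> R) (x : nat -> R) : R :=
  cbd beta d * lint d (fun h =>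
    (u (vadd x h) - u x) ^ 2 / Rpower (vnorm d h) (INR d + beta)).

(* on R^(2d): w = (h, sigma) with h i = w i, sigma i = w (d + i) *)
Definition Gamma2Op (d : nat) (beta : R) (u : (nat -> R) -> R) (x : nat -> R) : R :=
  cbd beta d ^ 2 * lint (d + d) (fun w =>
    let h := w in let s := fun i => w (d + i)%nat in
    (u (vadd (vadd x h) s) - u (vadd x h) - u (vadd x s) + u x) ^ 2
    / (Rpower (vnorm d h) (INR d + beta) * Rpower (vnorm d s) (INR d + beta))).

From Stdlib Require Import Reals Lra Lia List Classical ClassicalEpsilon FunctionalExtensionality PropExtensionality.
From Coquelicot Require Import Coquelicot.
Open Scope R_scope.

(* The proof is by dilation. For [lam > 0] the function [u_lam = u(lam .)] is again in
   C_c^oo, and the change of variables [h = lam h'] in the defining integrals gives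
     L u_lam (x/lam) = lam^beta L u(x),   Gamma(u_lam)(x/lam) = lam^beta Gamma(u)(x),
     Gamma_2(u_lam)(x/lam) = lam^(2 beta) Gamma_2(u)(x).
   CD(kappa, N) for [u_lam] at [x/lam] thus reads, with [s = lam^beta],
     s^2 (L u)^2 / N <= s^2 Gamma_2(u) + kappa s Gamma(u),
   and letting [s -> +oo] gives CD(0, N).

   The integral [lint] is the supremum of the integrals of step functions below
   the integrand. The change of variables holds in this form only when these lower sums
   are bounded; otherwise [lint] is a junk value, which dilation leaves unchanged. *)

Lemma Rpower_pos (x y : R) : 0 < Rpower x y.
Proof. apply exp_pos. Qed.

Lemma ln_le_mono (a b : R) : 0 < a -> a <= b -> ln a <= ln b.
Proof. intros Ha [Hab| ->]; [left; apply ln_increasing|]; lra. Qed.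

Lemma Rpower_le_of_log (a b e f : R) : e * ln a <= f * ln b -> Rpower a e <= Rpower b f.
Proof. unfold Rpower. intros [H| ->]; [left; apply exp_increasing|]; lra. Qed.

Lemma Rpower_base1 (y : R) : Rpower 1 y = 1.
Proof. unfold Rpower. rewrite ln_1, Rmult_0_r. apply exp_0. Qed.

Lemma ln_nonpos (a : R) : 0 < a <= 1 -> ln a <= 0.
Proof. intros Ha. rewrite <- ln_1. apply ln_le_mono; lra. Qed.

Lemma ln_nonneg (a : R) : 1 <= a -> 0 <= ln a.
Proof. intros Ha. rewrite <- ln_1. apply ln_le_mono; lra. Qed.

Lemma Rpower_le_1_below (x y : R) : 0 < x <= 1 -> 0 <= y -> Rpower x y <= 1.
Proof.
  intros Hx Hy. rewrite <- (Rpower_base1 0). apply Rpower_le_of_log.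
  rewrite ln_1. pose proof (ln_nonpos x Hx). nra.
Qed.

Lemma Rpower_le_1_above (x y : R) : 1 <= x -> y <= 0 -> Rpower x y <= 1.
Proof.
  intros Hx Hy. rewrite <- (Rpower_base1 0). apply Rpower_le_of_log.
  rewrite ln_1. pose proof (ln_nonneg x Hx). nra.
Qed.

(** * One-dimensional step functions *)

(* A weighted interval [(c, a, b)] stands for the step function [c * 1_[a,b]];
   a list of them stands for their sum. *)
Definition seg := (R * R * R)%type.

Definition indicator (a b t : R) : R :=
  if Rle_dec a t then if Rle_dec t b then 1 else 0 else 0.

Fixpoint seg_val (l : list seg) (t : R) : R :=
  match l with nil => 0 | (c, a, b) :: l' => c * indicator a b t + seg_val l' t end.

Fixpoint seg_int (l : list seg) : R :=
  match l with nil => 0 | (c, a, b) :: l' => c * (b - a) + seg_int l' end.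

(* integral over the half-line [0, +oo) *)
Fixpoint seg_int_pos (l : list seg) : R :=
  match l with nil => 0 | (c, a, b) :: l' => c * (Rmax b 0 - Rmax a 0) + seg_int_pos l' end.

(* integral over [lo, hi] *)
Fixpoint seg_int_on (l : list seg) (lo hi : R) : R :=
  match l with nil => 0 | (c, a, b) :: l' =>
    c * Rmax 0 (Rmin b hi - Rmax a lo) + seg_int_on l' lo hi end.

Fixpoint seg_weight (l : list seg) : R :=
  match l with nil => 0 | (c, a, b) :: l' => c + seg_weight l' end.

(* a number beyond every right end point *)
Fixpoint seg_reach (l : list seg) : R :=
  match l with nil => 0 | (c, a, b) :: l' => Rabs b + seg_reach l' end.

Definition seg_nonneg (p : seg) : Prop := let '(c, a, b) := p in 0 <= c /\ a <= b.
Definition seg_proper (p : seg) : Prop := let '(c, a, b) := p in 0 <= c /\ a < b.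

Lemma indicator_ge0 (a b t : R) : 0 <= indicator a b t.
Proof. unfold indicator. destruct (Rle_dec a t); destruct (Rle_dec t b); lra. Qed.

Lemma is_RInt_zero (lo hi : R) : is_RInt (fun _ => 0) lo hi 0.
Proof.
  assert (H : is_RInt (fun _ => 0) lo hi ((hi - lo) * 0)) by exact (is_RInt_const lo hi 0).
  rewrite Rmult_0_r in H. exact H.
Qed.

Lemma is_RInt_indicator (a b lo hi : R) : a < b -> lo <= hi ->
  is_RInt (indicator a b) lo hi (Rmax 0 (Rmin b hi - Rmax a lo)).
Proof.
  intros Hab Hlh.
  set (l := Rmax a lo). set (r := Rmin b hi).
  assert (Hl : a <= l /\ lo <= l) by (split; [apply Rmax_l|apply Rmax_r]).
  assert (Hr : r <= b /\ r <= hi) by (split; [apply Rmin_l|apply Rmin_r]).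
  destruct (Rle_dec r l) as [Hempty|Hnonempty].
  - rewrite Rmax_left by lra.
    apply is_RInt_ext with (fun _ => 0); [|apply is_RInt_zero].
    intros t Ht. rewrite Rmin_left, Rmax_right in Ht by lra.
    unfold indicator, l, r, Rmax, Rmin in *.
    destruct (Rle_dec a t); destruct (Rle_dec t b); try reflexivity.
    destruct (Rle_dec a lo); destruct (Rle_dec b hi); lra.
  - rewrite Rmax_right by lra.
    replace (r - l) with ((0 + (r - l)) + 0) by ring.
    apply (is_RInt_Chasles _ lo r hi (0 + (r - l)) 0);
      [apply (is_RInt_Chasles _ lo l r 0 (r - l))|].
    + apply is_RInt_ext with (fun _ => 0); [|apply is_RInt_zero].
      intros t Ht. rewrite Rmin_left, Rmax_right in Ht by lra.
      unfold indicator, l, Rmax in *. destruct (Rle_dec a t); [|reflexivity].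
      destruct (Rle_dec a lo); lra.
    + apply is_RInt_ext with (fun _ => 1).
      * intros t Ht. rewrite Rmin_left, Rmax_right in Ht by lra.
        unfold indicator. destruct (Rle_dec a t); [|lra]. destruct (Rle_dec t b); lra.
      * assert (H : is_RInt (fun _ => 1) l r ((r - l) * 1)) by exact (is_RInt_const l r 1).
        rewrite Rmult_1_r in H. exact H.
    + apply is_RInt_ext with (fun _ => 0); [|apply is_RInt_zero].
      intros t Ht. rewrite Rmin_left, Rmax_right in Ht by lra.
      unfold indicator, r, Rmin in *. destruct (Rle_dec a t); [|reflexivity].
      destruct (Rle_dec t b); [|reflexivity]. destruct (Rle_dec b hi); lra.
Qed.

Lemma is_RInt_seg_val (l : list seg) (lo hi : R) : List.Forall seg_proper l -> lo <= hi ->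
  is_RInt (seg_val l) lo hi (seg_int_on l lo hi).
Proof.
  induction l as [|[[c a] b] l IH]; intros Hl Hlh; simpl.
  - apply is_RInt_zero.
  - inversion Hl as [|? ? Hp Hl']; subst. destruct Hp as [Hc Hab].
    apply (is_RInt_plus (fun t => c * indicator a b t) (seg_val l)).
    + apply (is_RInt_scal (indicator a b)). apply is_RInt_indicator; auto.
    + apply IH; auto.
Qed.

Definition tail_bounded (phi : R -> R) (J : R) : Prop :=
  forall lo hi, 0 < lo <= hi -> exists I, is_RInt phi lo hi I /\ I <= J.

Lemma seg_weight_ge0 (l : list seg) : List.Forall seg_proper l -> 0 <= seg_weight l.
Proof.
  induction l as [|[[c a] b] l IH]; intros Hl; simpl; [lra|].
  inversion Hl as [|? ? Hp Hl']; subst. destruct Hp. specialize (IH Hl'). lra.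
Qed.

Lemma seg_reach_ge0 (l : list seg) : 0 <= seg_reach l.
Proof. induction l as [|[[c a] b] l IH]; simpl; [lra|]. pose proof (Rabs_pos b). lra. Qed.

Lemma seg_reach_ge (l : list seg) (c a b : R) : In (c, a, b) l -> b <= seg_reach l.
Proof.
  induction l as [|[[c' a'] b'] l IH]; intros Hin; simpl in *; [contradiction|].
  pose proof (seg_reach_ge0 l). pose proof (Rabs_pos b').
  destruct Hin as [[= -> -> ->]|Hin]; [pose proof (Rle_abs b)|specialize (IH Hin)]; lra.
Qed.

Lemma seg_int_pos_le_on (l : list seg) (e hi : R) : 0 < e ->
  List.Forall (fun p : seg => let '(c, a, b) := p in 0 <= c /\ b <= hi) l ->
  seg_int_pos l <= seg_int_on l e hi + e * seg_weight l.
Proof.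
  induction l as [|[[c a] b] l IH]; intros He Hl; simpl; [lra|].
  inversion Hl as [|? ? Hp Hl']; subst; destruct Hp as [Hc Hb]. specialize (IH He Hl').
  assert (Hk : Rmax b 0 - Rmax a 0 <= Rmax 0 (Rmin b hi - Rmax a e) + e).
  { rewrite Rmin_left by lra. unfold Rmax.
    destruct (Rle_dec b 0); destruct (Rle_dec a 0); destruct (Rle_dec a e);
      destruct (Rle_dec 0 (b - a)); destruct (Rle_dec 0 (b - e)); lra. }
  assert (c * (Rmax b 0 - Rmax a 0) <= c * (Rmax 0 (Rmin b hi - Rmax a e) + e))
    by (apply Rmult_le_compat_l; auto).
  lra.
Qed.

Lemma le_of_le_plus_small (a b c : R) : 0 <= c ->
  (forall e, 0 < e <= 1 -> a <= b + e * c) -> a <= b.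
Proof.
  intros Hc H. destruct (Rle_dec a b) as [|Hab]; auto. apply Rnot_le_lt in Hab.
  destruct Hc as [Hc| <-]; [|specialize (H 1); lra].
  set (e := Rmin 1 ((a - b) / (2 * c))).
  assert (He : 0 < e <= 1).
  { split; [apply Rmin_glb_lt; [lra|apply Rdiv_lt_0_compat; lra]|apply Rmin_l]. }
  assert (Hec : e * c <= (a - b) / 2).
  { apply Rle_trans with ((a - b) / (2 * c) * c).
    - apply Rmult_le_compat_r; [lra|apply Rmin_r].
    - right. field. lra. }
  specialize (H e He). lra.
Qed.

Lemma seg_int_pos_bound (M J : R) (phi : R -> R) (l : list seg) :
  0 <= M -> List.Forall seg_proper l ->
  (forall t, 0 < t -> seg_val l t <= M * phi t) -> tail_bounded phi J ->
  seg_int_pos l <= M * J.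
Proof.
  intros HM Hl Hdom Hphi.
  apply (le_of_le_plus_small _ _ (seg_weight l)); [apply seg_weight_ge0; auto|].
  intros e He. set (hi := 1 + seg_reach l). pose proof (seg_reach_ge0 l).
  destruct (Hphi e hi) as [I [HI HIJ]]; [unfold hi; lra|].
  assert (Hon : seg_int_on l e hi <= M * I).
  { apply (is_RInt_le (seg_val l) (fun t => M * phi t) e hi); [unfold hi; lra| | |].
    - apply is_RInt_seg_val; auto. unfold hi; lra.
    - apply (is_RInt_scal phi e hi M I). auto.
    - intros t Ht. apply Hdom. lra. }
  assert (Hcut : seg_int_pos l <= seg_int_on l e hi + e * seg_weight l).
  { apply seg_int_pos_le_on; [lra|]. apply Forall_forall. intros [[c a] b] Hin.
    rewrite Forall_forall in Hl. destruct (Hl _ Hin).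
    pose proof (seg_reach_ge l c a b Hin). unfold hi. split; [auto|lra]. }
  assert (M * I <= M * J) by (apply Rmult_le_compat_l; auto).
  lra.
Qed.

Definition nondegenerate (p : seg) : bool :=
  let '(c, a, b) := p in if Rlt_dec a b then true else false.

Definition reflect_seg (p : seg) : seg := let '(c, a, b) := p in (c, - b, - a).

Lemma seg_int_filter (l : list seg) : List.Forall seg_nonneg l ->
  seg_int l = seg_int (filter nondegenerate l).
Proof.
  induction l as [|[[c a] b] l IH]; intros Hl; simpl; [reflexivity|].
  inversion Hl as [|? ? Hp Hl']; subst; destruct Hp as [Hc Hab].
  destruct (Rlt_dec a b); simpl; rewrite IH by auto; [reflexivity|].
  replace b with a by lra. ring.
Qed.

Lemma seg_val_filter (l : list seg) (t : R) : List.Forall seg_nonneg l ->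
  seg_val (filter nondegenerate l) t <= seg_val l t.
Proof.
  induction l as [|[[c a] b] l IH]; intros Hl; simpl; [lra|].
  inversion Hl as [|? ? Hp Hl']; subst; destruct Hp as [Hc Hab]. specialize (IH Hl').
  assert (0 <= c * indicator a b t) by (apply Rmult_le_pos; [|apply indicator_ge0]; auto).
  destruct (Rlt_dec a b); simpl; lra.
Qed.

Lemma seg_int_split (l : list seg) :
  seg_int l = seg_int_pos l + seg_int_pos (map reflect_seg l).
Proof.
  induction l as [|[[c a] b] l IH]; simpl; [ring|]. rewrite IH.
  assert (Rmax b 0 - Rmax a 0 + (Rmax (- a) 0 - Rmax (- b) 0) = b - a).
  { unfold Rmax. destruct (Rle_dec b 0); destruct (Rle_dec a 0);
      destruct (Rle_dec (- a) 0); destruct (Rle_dec (- b) 0); lra. }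
  nra.
Qed.

Lemma seg_val_reflect (l : list seg) (t : R) : seg_val (map reflect_seg l) t = seg_val l (- t).
Proof.
  induction l as [|[[c a] b] l IH]; simpl; [reflexivity|]. rewrite IH.
  unfold indicator. destruct (Rle_dec (- b) t); destruct (Rle_dec t (- a));
    destruct (Rle_dec a (- t)); destruct (Rle_dec (- t) b); first [ring | lra].
Qed.

(* Integral over the line of a step function dominated off 0 by [M * phi], [phi] even:
   both half-lines are controlled by [seg_int_pos_bound]. *)
Lemma seg_int_bound (M J : R) (phi : R -> R) (l : list seg) :
  0 <= M -> List.Forall seg_nonneg l ->
  (forall t, t <> 0 -> seg_val l t <= M * phi t) -> (forall t, phi (- t) = phi t) ->
  tail_bounded phi J -> seg_int l <= M * (2 * J).
Proof.
  intros HM Hl Hdom Heven Hphi.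
  rewrite seg_int_filter, seg_int_split by auto.
  set (l' := filter nondegenerate l).
  assert (Hl' : List.Forall seg_proper l').
  { apply Forall_forall. intros [[c a] b] Hin. unfold l' in Hin.
    apply filter_In in Hin as [Hin Hnd]. rewrite Forall_forall in Hl.
    destruct (Hl _ Hin). simpl in Hnd. destruct (Rlt_dec a b); [split; auto|discriminate]. }
  assert (Hpos : seg_int_pos l' <= M * J).
  { apply seg_int_pos_bound with phi; auto. intros t Ht.
    eapply Rle_trans; [apply seg_val_filter; auto|]. apply Hdom. lra. }
  assert (Hneg : seg_int_pos (map reflect_seg l') <= M * J).
  { apply seg_int_pos_bound with phi; auto.
    - apply Forall_forall. intros p Hin. apply in_map_iff in Hin as [[[c a] b] [<- Hin]].
      rewrite Forall_forall in Hl'. destruct (Hl' _ Hin). simpl. lra.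
    - intros t Ht. rewrite seg_val_reflect, <- (Heven t).
      eapply Rle_trans; [apply seg_val_filter; auto|]. apply Hdom. lra. }
  lra.
Qed.

(** * An integrable one-dimensional kernel *)

Lemma is_RInt_Rpower (q lo hi : R) : 0 < lo <= hi -> q + 1 <> 0 ->
  is_RInt (fun t => Rpower t q) lo hi ((Rpower hi (q + 1) - Rpower lo (q + 1)) / (q + 1)).
Proof.
  intros Hlh Hq.
  set (F := fun t => Rpower t (q + 1) / (q + 1)).
  replace ((Rpower hi (q + 1) - Rpower lo (q + 1)) / (q + 1)) with (F hi - F lo)
    by (unfold F; field; auto).
  apply (is_RInt_derive F); intros t Ht; rewrite Rmin_left, Rmax_right in Ht by lra.
  - apply is_derive_Reals.
    assert (D := derivable_pt_lim_power t (q + 1) ltac:(lra)).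
    replace (q + 1 - 1) with q in D by ring.
    assert (D' := derivable_pt_lim_scal _ (/ (q + 1)) t _ D). unfold mult_real_fct in D'.
    replace (/ (q + 1) * ((q + 1) * Rpower t q)) with (Rpower t q) in D' by (field; auto).
    eapply derivable_pt_lim_ext; [|exact D']. intros s. unfold F, Rdiv. ring.
  - apply continuity_pt_filterlim, derivable_continuous_pt.
    exists (q * Rpower t (q - 1)). apply derivable_pt_lim_power. lra.
Qed.

(* [|t|^(-a)] near 0 and [|t|^(-b)] away from 0: integrable on the line when [a < 1 < b]. *)
Definition kernel1 (a b t : R) : R :=
  if Rlt_dec (Rabs t) 1 then Rpower (Rabs t) (- a) else Rpower (Rabs t) (- b).

Lemma kernel1_even (a b t : R) : kernel1 a b (- t) = kernel1 a b t.
Proof. unfold kernel1. rewrite Rabs_Ropp. reflexivity. Qed.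

Lemma kernel1_pos (a b t : R) : 0 < kernel1 a b t.
Proof. unfold kernel1. destruct (Rlt_dec (Rabs t) 1); apply Rpower_pos. Qed.

Lemma kernel1_tail_bounded (a b : R) : 0 <= a < 1 -> 1 < b ->
  tail_bounded (kernel1 a b) (/ (1 - a) + / (b - 1)).
Proof.
  intros Ha Hb.
  assert (Ja : 0 < / (1 - a)) by (apply Rinv_0_lt_compat; lra).
  assert (Jb : 0 < / (b - 1)) by (apply Rinv_0_lt_compat; lra).
  (* on (0, 1] the kernel is [t^(-a)], with primitive [t^(1-a)/(1-a)] *)
  assert (Near : forall lo hi, 0 < lo <= hi -> hi <= 1 ->
            exists I, is_RInt (kernel1 a b) lo hi I /\ I <= / (1 - a)).
  { intros lo hi Hlh Hhi.
    eexists; split.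
    - apply is_RInt_ext with (fun t => Rpower t (- a)); [|apply is_RInt_Rpower; lra].
      intros t Ht. rewrite Rmin_left, Rmax_right in Ht by lra.
      unfold kernel1. rewrite Rabs_right by lra. destruct (Rlt_dec t 1); [reflexivity|lra].
    - assert (Rpower hi (- a + 1) <= 1) by (apply Rpower_le_1_below; lra).
      pose proof (Rpower_pos lo (- a + 1)).
      replace ((Rpower hi (- a + 1) - Rpower lo (- a + 1)) / (- a + 1)) with
        ((Rpower hi (- a + 1) - Rpower lo (- a + 1)) * / (1 - a)) by (field; lra).
      rewrite <- (Rmult_1_l (/ (1 - a))) at 2. apply Rmult_le_compat_r; lra. }
  (* on [1, +oo) the kernel is [t^(-b)], with primitive [- t^(1-b)/(b-1)] *)
  assert (Far : forall lo hi, 1 <= lo <= hi ->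
            exists I, is_RInt (kernel1 a b) lo hi I /\ I <= / (b - 1)).
  { intros lo hi Hlh.
    eexists; split.
    - apply is_RInt_ext with (fun t => Rpower t (- b)); [|apply is_RInt_Rpower; lra].
      intros t Ht. rewrite Rmin_left, Rmax_right in Ht by lra.
      unfold kernel1. rewrite Rabs_right by lra. destruct (Rlt_dec t 1); [lra|reflexivity].
    - assert (Rpower lo (- b + 1) <= 1) by (apply Rpower_le_1_above; lra).
      pose proof (Rpower_pos hi (- b + 1)).
      replace ((Rpower hi (- b + 1) - Rpower lo (- b + 1)) / (- b + 1)) with
        ((Rpower lo (- b + 1) - Rpower hi (- b + 1)) * / (b - 1)) by (field; lra).
      rewrite <- (Rmult_1_l (/ (b - 1))) at 2. apply Rmult_le_compat_r; lra. }
  intros lo hi Hlh.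
  destruct (Rle_dec hi 1) as [Hhi|Hhi]; [|destruct (Rle_dec 1 lo) as [Hlo|Hlo]].
  - destruct (Near lo hi Hlh Hhi) as [I [HI HIJ]]. exists I. split; [auto|lra].
  - destruct (Far lo hi (conj Hlo (proj2 Hlh))) as [I [HI HIJ]]. exists I. split; [auto|lra].
  - destruct (Near lo 1 ltac:(lra) ltac:(lra)) as [I1 [HI1 HIJ1]].
    destruct (Far 1 hi ltac:(lra)) as [I2 [HI2 HIJ2]].
    exists (I1 + I2). split; [|lra].
    apply (is_RInt_Chasles _ lo 1 hi I1 I2); auto.
Qed.

Definition line_bounded (phi : R -> R) (I : R) : Prop :=
  forall M l, 0 <= M -> List.Forall seg_nonneg l ->
  (forall t, t <> 0 -> seg_val l t <= M * phi t) -> seg_int l <= M * I.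

Lemma kernel1_line_bounded (a b : R) : 0 <= a < 1 -> 1 < b ->
  line_bounded (kernel1 a b) (2 * (/ (1 - a) + / (b - 1))).
Proof.
  intros Ha Hb M l HM Hl Hdom. apply seg_int_bound with (kernel1 a b); auto.
  - apply kernel1_even.
  - apply kernel1_tail_bounded; auto.
Qed.

(** * Step functions on R^d and tensor products *)

Definition step_nonneg (k : nat) (p : step) : Prop :=
  let '(c, a, b) := p in 0 <= c /\ forall i, (i < k)%nat -> a i <= b i.

Lemma prod_upto_ext (k : nat) (f g : nat -> R) :
  (forall i, (i < k)%nat -> f i = g i) -> prod_upto k f = prod_upto k g.
Proof. induction k; intros H; simpl; auto. rewrite IHk by (intros; apply H; lia). rewrite H by lia. auto. Qed.

Lemma prod_upto_ge0 (k : nat) (f : nat -> R) :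
  (forall i, (i < k)%nat -> 0 <= f i) -> 0 <= prod_upto k f.
Proof.
  induction k; intros H; simpl; [lra|].
  apply Rmult_le_pos; [apply IHk; intros; apply H|apply H]; lia.
Qed.

Lemma prod_upto_ge_pow (k : nat) (f : nat -> R) (c : R) :
  0 <= c -> (forall i, (i < k)%nat -> c <= f i) -> c ^ k <= prod_upto k f.
Proof.
  induction k; intros Hc H; simpl; [lra|].
  assert (c ^ k <= prod_upto k f) by (apply IHk; auto; intros; apply H; lia).
  assert (c <= f k) by (apply H; lia). pose proof (pow_le c k Hc).
  rewrite Rmult_comm. apply Rmult_le_compat; auto.
Qed.

Lemma in_boxb_ext (k : nat) (a b x y : nat -> R) :
  (forall i, (i < k)%nat -> x i = y i) -> in_boxb k a b x = in_boxb k a b y.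
Proof. induction k; intros H; simpl; auto. rewrite IHk by (intros; apply H; lia). rewrite H by lia. auto. Qed.

Lemma setc_eq (x : nat -> R) (i : nat) (t : R) : setc x i t i = t.
Proof. unfold setc. rewrite Nat.eqb_refl. auto. Qed.

Lemma setc_neq (x : nat -> R) (i : nat) (t : R) (j : nat) : j <> i -> setc x i t j = x j.
Proof. intros H. unfold setc. apply Nat.eqb_neq in H. rewrite H. auto. Qed.

Lemma setc_setc (x : nat -> R) (k : nat) (t s : R) : setc (setc x k t) k s = setc x k s.
Proof. apply functional_extensionality. intros j. unfold setc. destruct (Nat.eqb j k); auto. Qed.

(* The section at [x_k = t] of a step function on R^(k+1), as a step function on R^k. *)
Definition step_slice (k : nat) (t : R) (l : list step) : list step :=
  map (fun p : step => let '(c, a, b) := p in (c * indicator (a k) (b k) t, a, b)) l.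

(* The one-dimensional step function [t |-> integral of the section at t]. *)
Definition step_marginal (k : nat) (l : list step) : list seg :=
  map (fun p : step => let '(c, a, b) := p in (c * box_vol k a b, a k, b k)) l.

Lemma step_slice_val (k : nat) (t : R) (l : list step) (x : nat -> R) :
  step_val k (step_slice k t l) x = step_val (S k) l (setc x k t).
Proof.
  induction l as [|[[c a] b] l IH]; simpl; auto. rewrite IH. f_equal.
  rewrite (in_boxb_ext k a b (setc x k t) x) by (intros; apply setc_neq; lia).
  rewrite setc_eq. unfold indicator, Rleb.
  destruct (in_boxb k a b x); simpl; [|ring].
  destruct (Rle_dec (a k) t); destruct (Rle_dec t (b k)); simpl; ring.
Qed.

Lemma step_slice_int (k : nat) (t : R) (l : list step) :
  step_int k (step_slice k t l) = seg_val (step_marginal k l) t.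
Proof. induction l as [|[[c a] b] l IH]; simpl; auto. rewrite IH. ring. Qed.

Lemma step_marginal_int (k : nat) (l : list step) :
  seg_int (step_marginal k l) = step_int (S k) l.
Proof. induction l as [|[[c a] b] l IH]; simpl; auto. rewrite IH. unfold box_vol. simpl. ring. Qed.

Lemma step_int_dim0 (l : list step) (x : nat -> R) : step_int 0 l = step_val 0 l x.
Proof. induction l as [|[[c a] b] l IH]; simpl; auto. rewrite IH. unfold box_vol. simpl. ring. Qed.

(* Fubini for step functions below a tensor power: if step functions on the line below
   [M * phi] have integral at most [M * I], then step functions on R^k below
   [M * phi(x_0) ... phi(x_(k-1))] have integral at most [M * I^k]. *)
Lemma step_int_tensor_bound (phi : R -> R) (I : R) :
  (forall t, 0 <= phi t) -> 0 <= I -> line_bounded phi I ->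
  forall k M l, 0 <= M -> List.Forall (step_nonneg k) l ->
  (forall x, (forall i, (i < k)%nat -> x i <> 0) ->
     step_val k l x <= M * prod_upto k (fun i => phi (x i))) ->
  step_int k l <= M * I ^ k.
Proof.
  intros Hphi HI Hline k. induction k as [|k IH]; intros M l HM Hl Hdom.
  - rewrite (step_int_dim0 l (fun _ => 0)). specialize (Hdom (fun _ => 0)).
    simpl in *. rewrite Rmult_1_r in *. apply Hdom. intros; lia.
  - rewrite <- step_marginal_int, <- tech_pow_Rmult.
    replace (M * (I * I ^ k)) with ((M * I ^ k) * I) by ring.
    apply Hline; [apply Rmult_le_pos; auto; apply pow_le; auto| |].
    + apply Forall_forall. intros p Hin. apply in_map_iff in Hin as [[[c a] b] [<- Hin]].
      rewrite Forall_forall in Hl. destruct (Hl _ Hin) as [Hc Hab]. split.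
      * apply Rmult_le_pos; auto. apply prod_upto_ge0. intros i Hi.
        specialize (Hab i ltac:(lia)). lra.
      * apply Hab. lia.
    + intros t Ht. rewrite <- step_slice_int.
      replace (M * I ^ k * phi t) with ((M * phi t) * I ^ k) by ring.
      apply IH; [apply Rmult_le_pos; auto| |].
      * apply Forall_forall. intros p Hin. apply in_map_iff in Hin as [[[c a] b] [<- Hin]].
        rewrite Forall_forall in Hl. destruct (Hl _ Hin) as [Hc Hab]. split.
        -- apply Rmult_le_pos; auto. apply indicator_ge0.
        -- intros i Hi. apply Hab. lia.
      * intros x Hx. rewrite step_slice_val. eapply Rle_trans.
        { apply Hdom. intros i Hi. destruct (Nat.eq_dec i k) as [->|Hik].
          - rewrite setc_eq. auto.
          - rewrite setc_neq by auto. apply Hx. lia. }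
        simpl. rewrite setc_eq.
        rewrite (prod_upto_ext k (fun i => phi (setc x k t i)) (fun i => phi (x i)))
          by (intros i Hi; rewrite setc_neq by lia; auto).
        right. ring.
Qed.

Lemma sum_upto_le (k : nat) (f g : nat -> R) :
  (forall i, (i < k)%nat -> f i <= g i) -> sum_upto k f <= sum_upto k g.
Proof.
  induction k; intros H; cbn [sum_upto]; [lra|].
  assert (f k <= g k) by (apply H; lia).
  assert (sum_upto k f <= sum_upto k g) by (apply IHk; intros; apply H; lia). lra.
Qed.

Lemma sum_upto_ext (k : nat) (f g : nat -> R) :
  (forall i, (i < k)%nat -> f i = g i) -> sum_upto k f = sum_upto k g.
Proof. induction k; intros H; simpl; auto. rewrite IHk by (intros; apply H; lia). rewrite H by lia. auto. Qed.

Lemma sum_upto_scal (k : nat) (c : R) (f : nat -> R) :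
  sum_upto k (fun i => c * f i) = c * sum_upto k f.
Proof. induction k; cbn [sum_upto]; [ring|]. rewrite IHk. ring. Qed.

Lemma sum_sq_ge0 (d : nat) (h : nat -> R) : 0 <= sum_upto d (fun i => h i ^ 2).
Proof. induction d; cbn [sum_upto]; [lra|]. pose proof (pow2_ge_0 (h d)). lra. Qed.

Lemma vnorm_ge0 (d : nat) (h : nat -> R) : 0 <= vnorm d h.
Proof. apply sqrt_pos. Qed.

Lemma coord_le_vnorm (d : nat) (h : nat -> R) (i : nat) : (i < d)%nat -> Rabs (h i) <= vnorm d h.
Proof.
  intros Hi. unfold vnorm. rewrite <- sqrt_Rsqr_abs. apply sqrt_le_1_alt.
  unfold Rsqr. replace (h i * h i) with (h i ^ 2) by ring.
  induction d; [lia|]. cbn [sum_upto]. pose proof (pow2_ge_0 (h d)).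
  destruct (Nat.eq_dec i d) as [->|]; [pose proof (sum_sq_ge0 d h)|specialize (IHd ltac:(lia))]; lra.
Qed.

Lemma vnorm0_coords (d : nat) (h : nat -> R) : vnorm d h = 0 -> forall i, (i < d)%nat -> h i = 0.
Proof.
  intros H i Hi. pose proof (coord_le_vnorm d h i Hi).
  destruct (Req_dec (h i) 0) as [|Hne]; auto. pose proof (Rabs_pos_lt _ Hne). lra.
Qed.

Lemma vnorm_pos (d : nat) (h : nat -> R) (i : nat) : (i < d)%nat -> h i <> 0 -> 0 < vnorm d h.
Proof. intros Hi Hh. pose proof (coord_le_vnorm d h i Hi). pose proof (Rabs_pos_lt _ Hh). lra. Qed.

Definition l1norm (d : nat) (h : nat -> R) : R := sum_upto d (fun i => Rabs (h i)).

Lemma l1norm_ge0 (d : nat) (h : nat -> R) : 0 <= l1norm d h.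
Proof. unfold l1norm. induction d; cbn [sum_upto]; [lra|]. pose proof (Rabs_pos (h d)). lra. Qed.

Lemma vnorm_le_l1norm (d : nat) (h : nat -> R) : vnorm d h <= l1norm d h.
Proof.
  unfold vnorm. rewrite <- (sqrt_pow2 (l1norm d h)) by apply l1norm_ge0.
  apply sqrt_le_1_alt. induction d; unfold l1norm in *; cbn [sum_upto] in *; [lra|].
  pose proof (l1norm_ge0 d h) as H. unfold l1norm in H. pose proof (Rabs_pos (h d)).
  replace (h d ^ 2) with (Rabs (h d) ^ 2) by (rewrite <- !Rsqr_pow2; symmetry; apply Rsqr_abs).
  nra.
Qed.

Lemma l1norm_le_vnorm (d : nat) (h : nat -> R) : l1norm d h <= INR d * vnorm d h.
Proof.
  unfold l1norm. induction d; cbn [sum_upto].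
  - simpl. pose proof (vnorm_ge0 0 h). lra.
  - assert (vnorm d h <= vnorm (S d) h).
    { unfold vnorm. apply sqrt_le_1_alt. cbn [sum_upto]. pose proof (pow2_ge_0 (h d)). lra. }
    assert (Rabs (h d) <= vnorm (S d) h) by (apply coord_le_vnorm; lia).
    assert (INR d * vnorm d h <= INR d * vnorm (S d) h)
      by (apply Rmult_le_compat_l; auto; apply pos_INR).
    rewrite S_INR. lra.
Qed.

(** * An integrable majorant on R^d *)

Definition sq_trunc (r : R) : R := if Rlt_dec r 1 then r ^ 2 else 1.

Section Majorant.
Variable d : nat.
Variable beta : R.
Hypothesis Hd : (1 <= d)%nat.
Hypothesis Hbeta : 0 < beta < 2.

(* [min(r^2, 1) / r^(d+beta)], the size of the integrands of [Lop] and [GammaOp]. *)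
Definition weight (r : R) : R := sq_trunc r / Rpower r (INR d + beta).

(* Exponents splitting [weight] into [d] one-dimensional factors [kernel1 a b]. *)
Definition near_exponent : R := Rmax ((INR d + beta - 2) / INR d) 0.
Definition far_exponent : R := (INR d + beta) / INR d.

Lemma INR_d_pos : 0 < INR d.
Proof. apply lt_0_INR. lia. Qed.

Lemma near_exponent_range : 0 <= near_exponent < 1.
Proof.
  pose proof INR_d_pos. unfold near_exponent. split; [apply Rmax_r|].
  apply Rmax_lub_lt; [|lra]. apply Rmult_lt_reg_r with (INR d); auto.
  unfold Rdiv. rewrite Rmult_assoc, Rinv_l by lra. lra.
Qed.

Lemma far_exponent_gt1 : 1 < far_exponent.
Proof.
  pose proof INR_d_pos. unfold far_exponent. apply Rmult_lt_reg_r with (INR d); auto.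
  unfold Rdiv. rewrite Rmult_assoc, Rinv_l by lra. lra.
Qed.

Definition radial_kernel (r : R) : R :=
  if Rlt_dec r 1 then Rpower r (- near_exponent) else Rpower r (- far_exponent).

Lemma weight_le_radial_kernel (r : R) : 0 < r -> weight r <= radial_kernel r ^ d.
Proof.
  intros Hr. pose proof INR_d_pos. pose proof near_exponent_range.
  unfold weight, sq_trunc, radial_kernel. unfold Rdiv. rewrite <- Rpower_Ropp.
  destruct (Rlt_dec r 1) as [Hr1|Hr1];
    rewrite <- Rpower_pow with (x := Rpower r _) by apply Rpower_pos; rewrite Rpower_mult.
  - replace (r ^ 2) with (Rpower r (INR 2)) by (apply Rpower_pow; auto).
    rewrite <- Rpower_plus. apply Rpower_le_of_log.
    assert (near_exponent * INR d >= INR d + beta - 2).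
    { apply Rle_ge. apply Rle_trans with ((INR d + beta - 2) / INR d * INR d).
      - right. field. lra.
      - apply Rmult_le_compat_r; [lra|apply Rmax_l]. }
    pose proof (ln_nonpos r ltac:(lra)). simpl INR. nra.
  - rewrite Rmult_1_l. right. f_equal. unfold far_exponent. field. lra.
Qed.

(* [kernel1] is radially decreasing, so a coordinate's kernel dominates the radial one. *)
Lemma kernel1_ge_radial (r t : R) : t <> 0 -> Rabs t <= r ->
  radial_kernel r <= kernel1 near_exponent far_exponent t.
Proof.
  intros Ht Htr. pose proof near_exponent_range. pose proof far_exponent_gt1.
  pose proof (Rabs_pos_lt t Ht).
  assert (Hlog : ln (Rabs t) <= ln r) by (apply ln_le_mono; lra).
  unfold radial_kernel, kernel1.
  destruct (Rlt_dec r 1); destruct (Rlt_dec (Rabs t) 1); try lra;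
    try (apply Rpower_le_of_log; nra).
  apply Rle_trans with 1; [apply Rpower_le_1_above; lra|].
  rewrite <- (Rpower_base1 0). apply Rpower_le_of_log. rewrite ln_1.
  pose proof (ln_nonpos (Rabs t) ltac:(lra)). nra.
Qed.

Lemma weight_le_tensor (h : nat -> R) : (forall i, (i < d)%nat -> h i <> 0) ->
  weight (vnorm d h) <= prod_upto d (fun i => kernel1 near_exponent far_exponent (h i)).
Proof.
  intros Hh. assert (Hr : 0 < vnorm d h) by (apply (vnorm_pos d h 0); [lia|apply Hh; lia]).
  eapply Rle_trans; [apply weight_le_radial_kernel; auto|].
  apply prod_upto_ge_pow.
  - unfold radial_kernel. destruct (Rlt_dec (vnorm d h) 1); left; apply Rpower_pos.
  - intros i Hi. apply kernel1_ge_radial; [apply Hh; auto|apply coord_le_vnorm; auto].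
Qed.

Lemma lower_sums_bounded_of_weight (f : (nat -> R) -> R) (K : R) : 0 <= K ->
  (forall h, (forall i, (i < d)%nat -> h i <> 0) -> f h <= K * weight (vnorm d h)) ->
  bound (lower_sums d f).
Proof.
  intros HK Hf. pose proof near_exponent_range. pose proof far_exponent_gt1.
  set (J := 2 * (/ (1 - near_exponent) + / (far_exponent - 1))).
  assert (HJ : 0 < J).
  { assert (0 < / (1 - near_exponent)) by (apply Rinv_0_lt_compat; lra).
    assert (0 < / (far_exponent - 1)) by (apply Rinv_0_lt_compat; lra). unfold J. lra. }
  exists (K * J ^ d). intros v [l [[Hl Hv] ->]].
  apply (step_int_tensor_bound (kernel1 near_exponent far_exponent) J); auto.
  - intros t. left. apply kernel1_pos.
  - lra.
  - apply kernel1_line_bounded; auto.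
  - intros x Hx. eapply Rle_trans; [apply Hv|]. eapply Rle_trans; [apply Hf; auto|].
    apply Rmult_le_compat_l; auto. apply weight_le_tensor; auto.
Qed.

End Majorant.

(** * Dilation of the lower integral *)

Definition dilate (lam : R) (x : nat -> R) : nat -> R := fun i => lam * x i.

Lemma dilate_inv (lam : R) (x : nat -> R) : lam <> 0 -> dilate lam (dilate (/ lam) x) = x.
Proof. intros H. apply functional_extensionality. intro i. unfold dilate. field. auto. Qed.

Lemma vnorm_dilate (d : nat) (lam : R) (h : nat -> R) :
  0 < lam -> vnorm d (dilate lam h) = lam * vnorm d h.
Proof.
  intros Hl. unfold vnorm.
  replace (sum_upto d (fun i => dilate lam h i ^ 2)) with (lam ^ 2 * sum_upto d (fun i => h i ^ 2))
    by (rewrite <- sum_upto_scal; apply sum_upto_ext; intros; unfold dilate; ring).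
  rewrite sqrt_mult_alt by apply pow2_ge_0. rewrite sqrt_pow2 by lra. auto.
Qed.

Lemma in_boxb_dilate (n : nat) (lam : R) (a b h : nat -> R) : 0 < lam ->
  in_boxb n (dilate (/ lam) a) (dilate (/ lam) b) h = in_boxb n a b (dilate lam h).
Proof.
  intros Hl. assert (Hl' : 0 < / lam) by (apply Rinv_0_lt_compat; auto).
  assert (Hle : forall s t, Rleb (/ lam * s) t = Rleb s (lam * t)).
  { intros s t. unfold Rleb. destruct (Rle_dec (/ lam * s) t) as [H|H];
      destruct (Rle_dec s (lam * t)) as [H'|H']; auto; exfalso.
    - apply H'. apply Rmult_le_compat_l with (r := lam) in H; [|lra].
      rewrite <- Rmult_assoc, Rinv_r, Rmult_1_l in H by lra. auto.
    - apply H. apply Rmult_le_compat_l with (r := / lam) in H'; [|lra].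
      rewrite <- Rmult_assoc, Rinv_l, Rmult_1_l in H' by lra. auto. }
  assert (Hge : forall s t, Rleb t (/ lam * s) = Rleb (lam * t) s).
  { intros s t. unfold Rleb. destruct (Rle_dec t (/ lam * s)) as [H|H];
      destruct (Rle_dec (lam * t) s) as [H'|H']; auto; exfalso.
    - apply H'. apply Rmult_le_compat_l with (r := lam) in H; [|lra].
      rewrite <- Rmult_assoc, Rinv_r, Rmult_1_l in H by lra. auto.
    - apply H. apply Rmult_le_compat_l with (r := / lam) in H'; [|lra].
      rewrite <- Rmult_assoc, Rinv_l, Rmult_1_l in H' by lra. auto. }
  induction n; simpl; auto. rewrite IHn. unfold dilate at 1 2 3 4. rewrite Hle, Hge. auto.
Qed.

Lemma box_vol_dilate (n : nat) (lam : R) (a b : nat -> R) :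
  box_vol n (dilate (/ lam) a) (dilate (/ lam) b) = (/ lam) ^ n * box_vol n a b.
Proof. unfold box_vol. induction n; simpl; [ring|]. rewrite IHn. unfold dilate. ring. Qed.

Definition dilate_steps (k lam : R) (l : list step) : list step :=
  map (fun p : step => let '(c, a, b) := p in (k * c, dilate (/ lam) a, dilate (/ lam) b)) l.

Lemma dilate_steps_val (n : nat) (k lam : R) (l : list step) (h : nat -> R) : 0 < lam ->
  step_val n (dilate_steps k lam l) h = k * step_val n l (dilate lam h).
Proof.
  intros Hl. induction l as [|[[c a] b] l IH]; simpl; [ring|].
  rewrite IH, in_boxb_dilate by auto. destruct (in_boxb n a b (dilate lam h)); ring.
Qed.

Lemma dilate_steps_int (n : nat) (k lam : R) (l : list step) :
  step_int n (dilate_steps k lam l) = k * (/ lam) ^ n * step_int n l.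
Proof. induction l as [|[[c a] b] l IH]; simpl; [ring|]. rewrite IH, box_vol_dilate. ring. Qed.

Lemma lower_sums_dilate (n : nat) (f : (nat -> R) -> R) (k lam w : R) : 0 < k -> 0 < lam ->
  lower_sums n f w -> lower_sums n (fun h => k * f (dilate lam h)) (k * (/ lam) ^ n * w).
Proof.
  intros Hk Hl [l [[Hok Hv] Hw]]. exists (dilate_steps k lam l). split; [split|].
  - apply Forall_forall. intros p Hin. apply in_map_iff in Hin as [[[c a] b] [<- Hin]].
    rewrite Forall_forall in Hok. destruct (Hok _ Hin) as [Hc Hab]. split.
    + apply Rmult_le_pos; lra.
    + intros i Hi. unfold dilate. apply Rmult_le_compat_l; auto.
      left; apply Rinv_0_lt_compat; lra.
  - intros x. rewrite dilate_steps_val by auto. apply Rmult_le_compat_l; [lra|]. apply Hv.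
  - rewrite dilate_steps_int, Hw. ring.
Qed.

Lemma lower_sums_undilate (n : nat) (f : (nat -> R) -> R) (k lam v : R) : 0 < k -> 0 < lam ->
  lower_sums n (fun h => k * f (dilate lam h)) v -> lower_sums n f (/ (k * (/ lam) ^ n) * v).
Proof.
  intros Hk Hl H.
  replace (/ (k * (/ lam) ^ n)) with (/ k * (/ / lam) ^ n)
    by (rewrite Rinv_mult, pow_inv; reflexivity).
  replace f with (fun h => / k * (fun h => k * f (dilate lam h)) (dilate (/ lam) h)) at 1.
  - apply (lower_sums_dilate n (fun h => k * f (dilate lam h)) (/ k) (/ lam) v); auto;
      apply Rinv_0_lt_compat; auto.
  - apply functional_extensionality. intros h. rewrite dilate_inv by lra. field. lra.
Qed.

Lemma is_lub_scale (S T : R -> Prop) (q m : R) : 0 < q ->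
  (forall v, S v -> T (q * v)) -> (forall w, T w -> S (/ q * w)) ->
  is_lub S m -> is_lub T (q * m).
Proof.
  intros Hq HST HTS [Hub Hleast]. split.
  - intros w Hw. apply HTS, Hub in Hw.
    replace w with (q * (/ q * w)) by (field; lra). apply Rmult_le_compat_l; lra.
  - intros b Hb. replace b with (q * (/ q * b)) by (field; lra).
    apply Rmult_le_compat_l; [lra|]. apply Hleast. intros v Hv.
    replace v with (/ q * (q * v)) by (field; lra).
    apply Rmult_le_compat_l; [left; apply Rinv_0_lt_compat; lra|]. apply Hb, HST, Hv.
Qed.

Lemma lint_is_lub (n : nat) (f : (nat -> R) -> R) :
  bound (lower_sums n f) -> (exists v, lower_sums n f v) -> is_lub (lower_sums n f) (lint n f).
Proof.
  intros Hb Hne. unfold lint. apply epsilon_spec.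
  destruct (completeness _ Hb Hne) as [m Hm]. exists m. auto.
Qed.

Lemma lint_dilate_bounded (n : nat) (f : (nat -> R) -> R) (k lam : R) : 0 < k -> 0 < lam ->
  bound (lower_sums n f) -> (exists v, lower_sums n f v) ->
  lint n (fun h => k * f (dilate lam h)) = k * (/ lam) ^ n * lint n f.
Proof.
  intros Hk Hl Hb Hne.
  assert (Hq : 0 < k * (/ lam) ^ n)
    by (apply Rmult_lt_0_compat; auto; apply pow_lt, Rinv_0_lt_compat; auto).
  assert (Hlub : is_lub (lower_sums n (fun h => k * f (dilate lam h))) (k * (/ lam) ^ n * lint n f)).
  { apply is_lub_scale with (lower_sums n f); auto.
    - intros v Hv. apply lower_sums_dilate; auto.
    - intros w Hw. apply lower_sums_undilate; auto.
    - apply lint_is_lub; auto. }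
  refine (is_lub_u _ _ _ (lint_is_lub _ _ _ _) Hlub).
  - exists (k * (/ lam) ^ n * lint n f). apply Hlub.
  - destruct Hne as [v Hv]. exists (k * (/ lam) ^ n * v). apply lower_sums_dilate; auto.
Qed.

(* An integral with unbounded lower sums has no least upper bound, before or after
   dilation, so its (junk) value is unchanged. *)
Lemma lint_dilate_unbounded (n : nat) (f : (nat -> R) -> R) (k lam : R) : 0 < k -> 0 < lam ->
  ~ bound (lower_sums n f) -> lint n (fun h => k * f (dilate lam h)) = lint n f.
Proof.
  intros Hk Hl Hnb.
  assert (Hq : 0 < k * (/ lam) ^ n)
    by (apply Rmult_lt_0_compat; auto; apply pow_lt, Rinv_0_lt_compat; auto).
  assert (Hnb' : ~ bound (lower_sums n (fun h => k * f (dilate lam h)))).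
  { intros [m Hm]. apply Hnb. exists (/ (k * (/ lam) ^ n) * m). intros w Hw.
    specialize (Hm _ (lower_sums_dilate n f k lam w Hk Hl Hw)).
    replace w with (/ (k * (/ lam) ^ n) * (k * (/ lam) ^ n * w))
      by (rewrite <- Rmult_assoc, Rinv_l by lra; ring).
    apply Rmult_le_compat_l; auto. left; apply Rinv_0_lt_compat; auto. }
  unfold lint. f_equal. apply functional_extensionality. intros v.
  apply propositional_extensionality.
  split; intros [Hub _]; exfalso; [apply Hnb'|apply Hnb]; exists v; auto.
Qed.

(** * Dilation invariance of C_c^oo(R^d) *)

Lemma setc_dilate (lam : R) (x : nat -> R) (i : nat) (t : R) :
  dilate lam (setc x i t) = setc (dilate lam x) i (lam * t).
Proof. apply functional_extensionality. intros j. unfold dilate, setc. destruct (Nat.eqb j i); auto. Qed.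

Lemma vsub_dilate (lam : R) (y x : nat -> R) :
  vsub (dilate lam y) (dilate lam x) = dilate lam (vsub y x).
Proof. apply functional_extensionality. intros j. unfold dilate, vsub. ring. Qed.

Lemma contd_dilate (d : nat) (c lam : R) (f : (nat -> R) -> R) :
  0 < lam -> contd d f -> contd d (fun y => c * f (dilate lam y)).
Proof.
  intros Hl Hf x eps He. pose proof (Rabs_pos c).
  destruct (Hf (dilate lam x) (eps / (Rabs c + 1))) as [del [Hd Hdel]].
  { apply Rdiv_lt_0_compat; lra. }
  exists (del / lam). split; [apply Rdiv_lt_0_compat; auto|].
  intros y Hy. rewrite <- Rmult_minus_distr_l, Rabs_mult.
  assert (Hy' : vnorm d (vsub (dilate lam y) (dilate lam x)) < del).
  { rewrite vsub_dilate, vnorm_dilate by auto.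
    apply Rmult_lt_compat_l with (r := lam) in Hy; auto.
    replace (lam * (del / lam)) with del in Hy by (field; lra). auto. }
  specialize (Hdel _ Hy'). pose proof (Rabs_pos (f (dilate lam y) - f (dilate lam x))).
  apply Rle_lt_trans with (Rabs c * (eps / (Rabs c + 1))); [apply Rmult_le_compat_l; lra|].
  replace (Rabs c * (eps / (Rabs c + 1))) with (eps * (Rabs c / (Rabs c + 1))) by (field; lra).
  assert (Rabs c / (Rabs c + 1) < 1).
  { apply Rmult_lt_reg_r with (Rabs c + 1); [lra|].
    unfold Rdiv. rewrite Rmult_assoc, Rinv_l by lra. lra. }
  nra.
Qed.

(* [c * f(lam y)] has partial derivatives [c * lam * (D_i f)(lam y)]: induction on the order. *)
Lemma Cn_dilate (d n : nat) : forall (c lam : R) (f : (nat -> R) -> R),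
  0 < lam -> Cn d n f -> Cn d n (fun y => c * f (dilate lam y)).
Proof.
  induction n as [|m IH]; intros c lam f Hl Hf.
  - simpl in *. split; auto. apply contd_dilate; tauto.
  - destruct Hf as [Hc [Du [HD HC]]]. split; [apply contd_dilate; auto|].
    exists (fun i y => (c * lam) * Du i (dilate lam y)). split.
    + intros i x Hi.
      assert (Hlin : derivable_pt_lim (fun t => lam * t) (x i) lam).
      { assert (D := derivable_pt_lim_scal id lam (x i) 1 (derivable_pt_lim_id (x i))).
        rewrite Rmult_1_r in D. exact D. }
      assert (Hcomp := derivable_pt_lim_comp (fun t => lam * t)
                         (fun s => f (setc (dilate lam x) i s)) _ _ _ Hlin (HD i _ Hi)).
      apply (derivable_pt_lim_scal _ c) in Hcomp. unfold mult_real_fct, comp in Hcomp.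
      replace (c * lam * Du i (dilate lam x)) with (c * (Du i (dilate lam x) * lam)) by ring.
      eapply derivable_pt_lim_ext; [|exact Hcomp]. intros t. simpl. rewrite setc_dilate. auto.
    + intros i Hi. apply IH; auto.
Qed.

Lemma Ccinf_dilate (d : nat) (lam : R) (u : (nat -> R) -> R) :
  0 < lam -> Ccinf d u -> Ccinf d (fun y => u (dilate lam y)).
Proof.
  intros Hl [Hdep [Hcn [R0 HR]]]. split; [|split].
  - intros x y H. apply Hdep. intros i Hi. unfold dilate. rewrite H; auto.
  - intros n. replace (fun y => u (dilate lam y)) with (fun y => 1 * u (dilate lam y))
      by (apply functional_extensionality; intros; ring).
    apply Cn_dilate; auto.
  - exists (R0 / lam). intros x Hx. apply HR. rewrite vnorm_dilate by auto.
    apply Rmult_lt_compat_l with (r := lam) in Hx; auto.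
    replace (lam * (R0 / lam)) with R0 in Hx by (field; lra). auto.
Qed.

(** * Continuous functions are bounded on boxes *)

(* Transport between points of R^n and the tuples of Coquelicot's compactness theorem. *)
Fixpoint to_Tn (n : nat) (x : nat -> R) : Compactness.Tn n R :=
  match n with O => tt | S m => (x O, to_Tn m (fun i => x (S i))) end.

Fixpoint of_Tn (n : nat) : Compactness.Tn n R -> nat -> R :=
  match n with
  | O => fun _ _ => 0
  | S m => fun t i => match i with O => fst t | S j => of_Tn m (snd t) j end
  end.

Lemma bounded_n_to_Tn (n : nat) (a b x : nat -> R) :
  (forall i, (i < n)%nat -> a i <= x i <= b i) -> bounded_n n (to_Tn n a) (to_Tn n b) (to_Tn n x).
Proof.
  revert a b x. induction n as [|n IH]; intros a b x H; simpl; auto.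
  split; [apply H; lia|]. apply IH. intros i Hi. apply H. lia.
Qed.

Lemma close_n_of_Tn (n : nat) (e : R) (x : nat -> R) (t : Compactness.Tn n R) :
  close_n n e (to_Tn n x) t -> forall i, (i < n)%nat -> Rabs (x i - of_Tn n t i) < e.
Proof.
  revert x t. induction n as [|n IH]; intros x t Hc i Hi; [lia|].
  destruct t as [t1 t2]. destruct Hc as [H1 H2]. destruct i as [|i]; simpl; auto. apply (IH _ _ H2). lia.
Qed.

Definition inbox (d : nat) (a b y : nat -> R) : Prop := forall i, (i < d)%nat -> a i <= y i <= b i.

Lemma vnorm_le_coords (d : nat) (h : nat -> R) (del : R) :
  (forall i, (i < d)%nat -> Rabs (h i) <= del) -> vnorm d h <= INR d * del.
Proof.
  intros H. eapply Rle_trans; [apply vnorm_le_l1norm|]. unfold l1norm.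
  eapply Rle_trans; [apply sum_upto_le with (g := fun _ => del); auto|].
  right. clear. induction d; cbn [sum_upto]; [simpl; ring|]. rewrite IHd, S_INR. ring.
Qed.

Lemma le_list_max {A : Type} (g : A -> R) (l : list A) (t : A) :
  In t l -> g t <= fold_right (fun s m => Rmax (g s) m) 0 l.
Proof.
  induction l as [|s l IH]; intros Hin; simpl in *; [contradiction|].
  destruct Hin as [<-|Hin]; [apply Rmax_l|]. eapply Rle_trans; [apply IH; auto|apply Rmax_r].
Qed.

(* Heine-Borel: cover the box by finitely many neighbourhoods on which [f] varies by < 1. *)
Lemma contd_bounded_on_box (d : nat) (f : (nat -> R) -> R) (a b : nat -> R) :
  contd d f -> exists M, 0 <= M /\ forall y, inbox d a b y -> Rabs (f y) <= M.
Proof.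
  intros Hf.
  assert (Hloc : forall t : Compactness.Tn d R, exists del : posreal, forall y,
            (forall i, (i < d)%nat -> Rabs (y i - of_Tn d t i) < del) ->
            Rabs (f y - f (of_Tn d t)) < 1).
  { intros t. destruct (Hf (of_Tn d t) 1 Rlt_0_1) as [del [Hdel Hclose]].
    assert (Hd : 0 < del / (INR d + 1)) by (apply Rdiv_lt_0_compat; pose proof (pos_INR d); lra).
    exists (mkposreal _ Hd). intros y Hy. apply Hclose.
    eapply Rle_lt_trans; [apply vnorm_le_coords with (del := del / (INR d + 1))|].
    - intros i Hi. left. apply Hy. auto.
    - pose proof (pos_INR d).
      apply Rmult_lt_reg_r with (INR d + 1); [lra|].
      replace (INR d * (del / (INR d + 1)) * (INR d + 1)) with (INR d * del) by (field; lra). nra. }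
  destruct (choice _ Hloc) as [delta Hdelta].
  apply NNPP. intros Hno. apply (compactness_list d (to_Tn d a) (to_Tn d b) delta).
  intros [l Hl]. apply Hno.
  exists (fold_right (fun s m => Rmax (Rabs (f (of_Tn d s)) + 1) m) 0 l). split.
  - destruct l as [|s l]; simpl; [lra|]. eapply Rle_trans; [|apply Rmax_l].
    pose proof (Rabs_pos (f (of_Tn d s))). lra.
  - intros y Hy. destruct (Hl (to_Tn d y) (bounded_n_to_Tn d a b y Hy)) as [t [Hin [_ Hc]]].
    specialize (Hdelta t y (close_n_of_Tn d _ y t Hc)).
    eapply Rle_trans; [|apply (le_list_max (fun s => Rabs (f (of_Tn d s)) + 1) l t Hin)].
    replace (f y) with ((f y - f (of_Tn d t)) + f (of_Tn d t)) by ring.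
    eapply Rle_trans; [apply Rabs_triang|]. simpl. lra.
Qed.

(** * Mean value estimates *)

Lemma mvt_bound (G G' : R -> R) (y z K : R) :
  (forall t, Rmin y z <= t <= Rmax y z -> derivable_pt_lim G t (G' t)) ->
  (forall t, Rmin y z <= t <= Rmax y z -> Rabs (G' t) <= K) ->
  Rabs (G z - G y) <= K * Rabs (z - y).
Proof.
  intros HD HK. destruct (Rtotal_order y z) as [H|[<-|H]].
  - destruct (MVT_cor2 G G' y z H) as [c [Hc Hcyz]].
    { intros c Hc. apply HD. rewrite Rmin_left, Rmax_right by lra. auto. }
    rewrite Hc, Rabs_mult. apply Rmult_le_compat_r; [apply Rabs_pos|].
    apply HK. rewrite Rmin_left, Rmax_right by lra. lra.
  - replace (G y - G y) with 0 by ring. replace (y - y) with 0 by ring. rewrite Rabs_R0.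
    assert (0 <= K).
    { apply Rle_trans with (Rabs (G' y)); [apply Rabs_pos|]. apply HK.
      rewrite Rmin_left, Rmax_left by lra. lra. }
    lra.
  - destruct (MVT_cor2 G G' z y H) as [c [Hc Hczy]].
    { intros c Hc. apply HD. rewrite Rmin_right, Rmax_left by lra. auto. }
    rewrite <- Rabs_Ropp, <- (Rabs_Ropp (z - y)).
    replace (- (G z - G y)) with (G y - G z) by ring. replace (- (z - y)) with (y - z) by ring.
    rewrite Hc, Rabs_mult. apply Rmult_le_compat_r; [apply Rabs_pos|].
    apply HK. rewrite Rmin_right, Rmax_left by lra. lra.
Qed.

(* [splice k y z] takes its first [k] coordinates from [y] and the others from [z]:
   moving from [z] to [y] one coordinate at a time. *)
Definition splice (k : nat) (y z : nat -> R) : nat -> R := fun i => if Nat.ltb i k then y i else z i.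

Lemma splice_0 (y z : nat -> R) : splice 0 y z = z.
Proof. reflexivity. Qed.

Lemma splice_S (k : nat) (y z : nat -> R) : splice (S k) y z = setc (splice k y z) k (y k).
Proof.
  apply functional_extensionality. intros i. unfold splice, setc.
  destruct (Nat.eqb_spec i k); destruct (Nat.ltb_spec i (S k)); destruct (Nat.ltb_spec i k);
    subst; auto; lia.
Qed.

Lemma splice_self (k : nat) (y z : nat -> R) : splice k y z = setc (splice k y z) k (z k).
Proof.
  apply functional_extensionality. intros i. unfold splice, setc.
  destruct (Nat.eqb_spec i k); destruct (Nat.ltb_spec i k); subst; auto; lia.
Qed.

Lemma splice_full (d : nat) (u : (nat -> R) -> R) (y z : nat -> R) :
  depends_first d u -> u (splice d y z) = u y.
Proof.
  intros Hdep. apply Hdep. intros i Hi. unfold splice.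
  replace (Nat.ltb i d) with true by (symmetry; apply Nat.ltb_lt; auto). auto.
Qed.

Lemma partial_along (u Dk : (nat -> R) -> R) (k : nat) (y : nat -> R) (t : R) :
  derivable_pt_lim (fun s => u (setc (setc y k t) k s)) (setc y k t k) (Dk (setc y k t)) ->
  derivable_pt_lim (fun s => u (setc y k s)) t (Dk (setc y k t)).
Proof.
  intros H. rewrite setc_eq in H. eapply derivable_pt_lim_ext; [|exact H].
  intros s. simpl. rewrite setc_setc. auto.
Qed.

Lemma lipschitz_on_box (d : nat) (f : (nat -> R) -> R) (Df : nat -> (nat -> R) -> R) (a b : nat -> R) (K : R) :
  depends_first d f ->
  (forall j y, (j < d)%nat -> derivable_pt_lim (fun t => f (setc y j t)) (y j) (Df j y)) ->
  (forall j y, (j < d)%nat -> inbox d a b y -> Rabs (Df j y) <= K) ->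
  forall y z, inbox d a b y -> inbox d a b z -> Rabs (f y - f z) <= K * l1norm d (vsub y z).
Proof.
  intros Hdep HD HK y z Hy Hz. rewrite <- (splice_full d f y z Hdep).
  assert (Hsteps : forall k, (k <= d)%nat ->
            Rabs (f (splice k y z) - f z) <= K * sum_upto k (fun j => Rabs (vsub y z j))).
  { induction k as [|k IH]; intros Hk.
    - rewrite splice_0. cbn [sum_upto]. replace (f z - f z) with 0 by ring. rewrite Rabs_R0. lra.
    - assert (Hseg : forall t, Rmin (z k) (y k) <= t <= Rmax (z k) (y k) ->
                inbox d a b (setc (splice k y z) k t)).
      { intros t Ht i Hi. unfold setc, splice. destruct (Nat.eqb_spec i k) as [->|].
        - specialize (Hy k Hi). specialize (Hz k Hi).
          unfold Rmin, Rmax in Ht. destruct (Rle_dec (z k) (y k)); lra.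
        - destruct (Nat.ltb i k); auto. }
      assert (Hstep : Rabs (f (splice (S k) y z) - f (splice k y z)) <= K * Rabs (y k - z k)).
      { rewrite splice_S. rewrite (splice_self k y z) at 2.
        apply (mvt_bound (fun t => f (setc (splice k y z) k t))
                         (fun t => Df k (setc (splice k y z) k t)) (z k) (y k) K).
        - intros t Ht. apply (partial_along f (Df k)), HD. lia.
        - intros t Ht. apply HK; [lia|]. apply Hseg; auto. }
      specialize (IH ltac:(lia)). cbn [sum_upto]. unfold vsub at 2.
      replace (f (splice (S k) y z) - f z) with
        ((f (splice (S k) y z) - f (splice k y z)) + (f (splice k y z) - f z)) by ring.
      eapply Rle_trans; [apply Rabs_triang|]. lra. }
  apply Hsteps. lia.
Qed.

Lemma setc_same (y : nat -> R) (k : nat) : setc y k (y k) = y.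
Proof. apply functional_extensionality. intros i. unfold setc. destruct (Nat.eqb_spec i k); subst; auto. Qed.

(* One coordinate step of a symmetric second difference: moving the [k]-th coordinates of
   [p] and [q] by [+s] and [-s] changes [u p + u q] by at most [L * |s|], if along the way
   the two partial derivatives differ by at most [L]. *)
Lemma symmetric_step (u Du : (nat -> R) -> R) (k : nat) (p q : nat -> R) (s L : R) :
  (forall y, derivable_pt_lim (fun t => u (setc y k t)) (y k) (Du y)) ->
  (forall t, Rabs t <= Rabs s -> Rabs (Du (setc p k (p k + t)) - Du (setc q k (q k - t))) <= L) ->
  Rabs (u (setc p k (p k + s)) + u (setc q k (q k - s)) - (u p + u q)) <= L * Rabs s.
Proof.
  intros HD HL.
  set (Phi := fun t => u (setc p k (p k + t)) + u (setc q k (q k - t))).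
  assert (Phi0 : Phi 0 = u p + u q).
  { unfold Phi. rewrite Rplus_0_r, Rminus_0_r, !setc_same. auto. }
  rewrite <- Phi0. replace (Rabs s) with (Rabs (s - 0)) by (f_equal; ring).
  change (Rabs (Phi s - Phi 0) <= L * Rabs (s - 0)).
  apply mvt_bound with (fun t => Du (setc p k (p k + t)) - Du (setc q k (q k - t))).
  - intros t Ht. apply derivable_pt_lim_plus.
    + replace (Du (setc p k (p k + t))) with (Du (setc p k (p k + t)) * (0 + 1)) by ring.
      apply (derivable_pt_lim_comp (fun t => p k + t) (fun r => u (setc p k r))).
      * apply derivable_pt_lim_plus; [apply derivable_pt_lim_const|apply derivable_pt_lim_id].
      * apply (partial_along u Du), HD.
    + replace (- Du (setc q k (q k - t))) with (Du (setc q k (q k - t)) * (0 - 1)) by ring.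
      apply (derivable_pt_lim_comp (fun t => q k - t) (fun r => u (setc q k r))).
      * apply derivable_pt_lim_minus; [apply derivable_pt_lim_const|apply derivable_pt_lim_id].
      * apply (partial_along u Du), HD.
  - intros t Ht. apply HL. unfold Rmin, Rmax in Ht.
    destruct (Rle_dec 0 s); [rewrite (Rabs_right s), Rabs_right|rewrite (Rabs_left s), Rabs_left1]; lra.
Qed.

Lemma moving_points_near (x h : nat -> R) (k : nat) (t : R) : Rabs t <= Rabs (h k) ->
  (forall i, Rabs (setc (splice k (vadd x h) x) k (x k + t) i - x i) <= Rabs (h i)) /\
  (forall i, Rabs (setc (splice k (vsub x h) x) k (x k - t) i - x i) <= Rabs (h i)).
Proof.
  intros Ht.
  assert (Hrest : forall i, Rabs (x i - x i) <= Rabs (h i))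
    by (intros i; rewrite Rminus_diag, Rabs_R0; apply Rabs_pos).
  split; intros i; unfold setc, splice, vadd, vsub;
    destruct (Nat.eqb_spec i k) as [->|]; try destruct (Nat.ltb i k); auto.
  - replace (x k + t - x k) with t by ring. auto.
  - replace (x i + h i - x i) with (h i) by ring. lra.
  - replace (x k - t - x k) with (- t) by ring. rewrite Rabs_Ropp. auto.
  - replace (x i - h i - x i) with (- h i) by ring. rewrite Rabs_Ropp. lra.
Qed.

Lemma second_difference_bound (d : nat) (u : (nat -> R) -> R) (Du : nat -> (nat -> R) -> R)
    (x : nat -> R) (K2 : R) (B : (nat -> R) -> Prop) (h : nat -> R) :
  0 <= K2 -> depends_first d u ->
  (forall j y, (j < d)%nat -> derivable_pt_lim (fun t => u (setc y j t)) (y j) (Du j y)) ->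
  (forall j y z, (j < d)%nat -> B y -> B z -> Rabs (Du j y - Du j z) <= K2 * l1norm d (vsub y z)) ->
  (forall y, (forall i, (i < d)%nat -> Rabs (y i - x i) <= Rabs (h i)) -> B y) ->
  Rabs (u (vadd x h) - 2 * u x + u (vsub x h)) <= 2 * K2 * l1norm d h ^ 2.
Proof.
  intros HK2 Hdep HD HL HB.
  set (Sh := l1norm d h). assert (HS : 0 <= Sh) by apply l1norm_ge0.
  set (P := fun k => splice k (vadd x h) x). set (Q := fun k => splice k (vsub x h) x).
  assert (Hsteps : forall k, (k <= d)%nat ->
            Rabs ((u (P k) - u x) + (u (Q k) - u x)) <= 2 * K2 * Sh * sum_upto k (fun j => Rabs (h j))).
  { induction k as [|k IH]; intros Hk.
    - unfold P, Q. rewrite !splice_0. cbn [sum_upto].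
      replace (u x - u x + (u x - u x)) with 0 by ring. rewrite Rabs_R0. lra.
    - specialize (IH ltac:(lia)).
      assert (HPk : P k k = x k) by (unfold P, splice; rewrite Nat.ltb_irrefl; auto).
      assert (HQk : Q k k = x k) by (unfold Q, splice; rewrite Nat.ltb_irrefl; auto).
      assert (HP : P (S k) = setc (P k) k (P k k + h k)) by (unfold P at 1; rewrite splice_S, HPk; auto).
      assert (HQ : Q (S k) = setc (Q k) k (Q k k - h k)) by (unfold Q at 1; rewrite splice_S, HQk; auto).
      assert (Hstep : Rabs (u (P (S k)) + u (Q (S k)) - (u (P k) + u (Q k))) <= 2 * K2 * Sh * Rabs (h k)).
      { rewrite HP, HQ. apply (symmetric_step u (Du k)); [intros y; apply HD; lia|].
        intros t Ht. rewrite HPk, HQk.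
        destruct (moving_points_near x h k t Ht) as [Hp Hq]. fold (P k) (Q k) in Hp, Hq.
        eapply Rle_trans; [apply HL; [lia|apply HB; intros; apply Hp|apply HB; intros; apply Hq]|].
        replace (2 * K2 * Sh) with (K2 * (2 * Sh)) by ring. apply Rmult_le_compat_l; auto.
        unfold Sh, l1norm. rewrite <- sum_upto_scal. apply sum_upto_le. intros i Hi.
        unfold vsub at 1.
        replace (setc (P k) k (x k + t) i - setc (Q k) k (x k - t) i) with
          ((setc (P k) k (x k + t) i - x i) - (setc (Q k) k (x k - t) i - x i)) by ring.
        eapply Rle_trans; [apply Rabs_triang|]. rewrite Rabs_Ropp. specialize (Hp i). specialize (Hq i). lra. }
      cbn [sum_upto].
      replace (u (P (S k)) - u x + (u (Q (S k)) - u x)) with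
        ((u (P (S k)) + u (Q (S k)) - (u (P k) + u (Q k))) + ((u (P k) - u x) + (u (Q k) - u x))) by ring.
      eapply Rle_trans; [apply Rabs_triang|]. lra. }
  specialize (Hsteps d (le_n d)). unfold P, Q in Hsteps.
  rewrite !(splice_full d u _ _ Hdep) in Hsteps. fold (l1norm d h) Sh in Hsteps.
  replace (u (vadd x h) - 2 * u x + u (vsub x h)) with (u (vadd x h) - u x + (u (vsub x h) - u x)) by ring.
  replace (2 * K2 * Sh ^ 2) with (2 * K2 * Sh * Sh) by ring. auto.
Qed.

Lemma contd_depends_first (d : nat) (f : (nat -> R) -> R) : contd d f -> depends_first d f.
Proof.
  intros Hc x y Hxy. destruct (Req_dec (f x) (f y)) as [E|E]; auto. exfalso.
  assert (Hp : 0 < Rabs (f x - f y)) by (apply Rabs_pos_lt; lra).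
  destruct (Hc y _ Hp) as [del [Hd Hdel]].
  assert (vnorm d (vsub x y) <= 0).
  { eapply Rle_trans; [apply vnorm_le_coords with (del := 0)|rewrite Rmult_0_r; lra].
    intros i Hi. unfold vsub. rewrite Hxy, Rminus_diag, Rabs_R0 by auto. lra. }
  specialize (Hdel x ltac:(lra)). lra.
Qed.

Lemma finite_max (d : nat) (P : nat -> R -> Prop) :
  (forall j M M', P j M -> M <= M' -> P j M') ->
  (forall j, (j < d)%nat -> exists M, P j M) -> exists M, 0 <= M /\ forall j, (j < d)%nat -> P j M.
Proof.
  intros Hmono. induction d as [|d IH]; intros H.
  - exists 0. split; [lra|]. intros; lia.
  - destruct IH as [M1 [HM1 H1]]; [intros j Hj; apply H; lia|].
    destruct (H d (Nat.lt_succ_diag_r d)) as [M2 H2].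
    exists (Rmax M1 M2). split; [eapply Rle_trans; [exact HM1|apply Rmax_l]|]. intros j Hj.
    destruct (Nat.eq_dec j d) as [->|].
    + eapply Hmono; [exact H2|apply Rmax_r].
    + eapply Hmono; [apply H1; lia|apply Rmax_l].
Qed.

Lemma Ccinf_bounded (d : nat) (u : (nat -> R) -> R) :
  Ccinf d u -> exists M, 0 <= M /\ forall y, Rabs (u y) <= M.
Proof.
  intros [_ [Hcn [R0 HR]]]. destruct (Hcn O) as [Hc _].
  destruct (contd_bounded_on_box d u (fun _ => - Rabs R0) (fun _ => Rabs R0) Hc) as [M [HM HMb]].
  exists M. split; auto. intros y.
  destruct (classic (inbox d (fun _ => - Rabs R0) (fun _ => Rabs R0) y)) as [Hin|Hout]; auto.
  (* outside the box some coordinate, hence the norm, exceeds the support radius *)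
  apply not_all_ex_not in Hout as [i Hi]. apply imply_to_and in Hi as [Hi Hn].
  assert (Rabs R0 < Rabs (y i)).
  { destruct (Rle_dec (Rabs (y i)) (Rabs R0)) as [Hle|]; [|lra].
    exfalso. apply Hn. apply Rabs_le_between in Hle. auto. }
  pose proof (coord_le_vnorm d y i Hi). pose proof (Rle_abs R0).
  rewrite HR, Rabs_R0 by lra. auto.
Qed.

Lemma Ccinf_partials (d : nat) (u : (nat -> R) -> R) : Ccinf d u ->
  exists Du : nat -> (nat -> R) -> R,
    (forall j y, (j < d)%nat -> derivable_pt_lim (fun t => u (setc y j t)) (y j) (Du j y)) /\
    forall a b, exists K1 K2, 0 <= K1 /\ 0 <= K2 /\
      (forall j y, (j < d)%nat -> inbox d a b y -> Rabs (Du j y) <= K1) /\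
      (forall j y z, (j < d)%nat -> inbox d a b y -> inbox d a b z ->
         Rabs (Du j y - Du j z) <= K2 * l1norm d (vsub y z)).
Proof.
  intros [_ [Hcn _]]. destruct (Hcn 2%nat) as [_ [Du [HD HC1]]].
  exists Du. split; auto. intros a b.
  destruct (finite_max d (fun j K => forall y, inbox d a b y -> Rabs (Du j y) <= K)) as [K1 [HK1 HK1b]].
  { intros j K K' H HKK y Hy. eapply Rle_trans; [apply H|]; auto. }
  { intros j Hj. destruct (HC1 j Hj) as [Hcj _].
    destruct (contd_bounded_on_box d (Du j) a b Hcj) as [Mj [_ HMj]]. exists Mj. auto. }
  destruct (finite_max d (fun j L => forall y z, inbox d a b y -> inbox d a b z ->
              Rabs (Du j y - Du j z) <= L * l1norm d (vsub y z))) as [K2 [HK2 HK2b]].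
  { intros j K K' H HKK y z Hy Hz. eapply Rle_trans; [apply H; auto|].
    apply Rmult_le_compat_r; auto. apply l1norm_ge0. }
  { intros j Hj. destruct (HC1 j Hj) as [Hcj [D2 [HD2 HC2]]].
    destruct (finite_max d (fun i K => forall y, inbox d a b y -> Rabs (D2 i y) <= K)) as [L [HL HLb]].
    { intros i K K' H HKK y Hy. eapply Rle_trans; [apply H|]; auto. }
    { intros i Hi. destruct (HC2 i Hi) as [Hci _].
      destruct (contd_bounded_on_box d (D2 i) a b Hci) as [Mi [_ HMi]]. exists Mi. auto. }
    exists L. apply (lipschitz_on_box d (Du j) D2 a b L); auto.
    apply contd_depends_first; auto. }
  exists K1, K2. repeat split; auto.
Qed.

Lemma Ccinf_local_estimates (d : nat) (u : (nat -> R) -> R) (x : nat -> R) : Ccinf d u ->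
  exists K1 K2, 0 <= K1 /\ 0 <= K2 /\
    (forall h, vnorm d h < 1 -> Rabs (u (vadd x h) - u x) <= K1 * l1norm d h) /\
    (forall h, vnorm d h < 1 ->
       Rabs (u (vadd x h) - 2 * u x + u (vsub x h)) <= 2 * K2 * l1norm d h ^ 2).
Proof.
  intros Hu. pose proof (proj1 Hu) as Hdep.
  destruct (Ccinf_partials d u Hu) as [Du [HD Hbox]].
  destruct (Hbox (fun i => x i - 1) (fun i => x i + 1)) as [K1 [K2 [HK1 [HK2 [HDu HLip]]]]].
  assert (Hnear : forall h y, vnorm d h < 1 ->
            (forall i, (i < d)%nat -> Rabs (y i - x i) <= Rabs (h i)) ->
            inbox d (fun i => x i - 1) (fun i => x i + 1) y).
  { intros h y Hh Hy i Hi. specialize (Hy i Hi). pose proof (coord_le_vnorm d h i Hi).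
    assert (Hyx : Rabs (y i - x i) <= 1) by lra. apply Rabs_le_between in Hyx. lra. }
  exists K1, K2. repeat split; auto.
  - intros h Hh.
    replace (l1norm d h) with (l1norm d (vsub (vadd x h) x))
      by (apply sum_upto_ext; intros i Hi; unfold vsub, vadd; f_equal; ring).
    apply (lipschitz_on_box d u Du _ _ K1 Hdep HD HDu); apply (Hnear h); auto; intros i Hi.
    + unfold vadd. replace (x i + h i - x i) with (h i) by ring. lra.
    + rewrite Rminus_diag, Rabs_R0. apply Rabs_pos.
  - intros h Hh. apply (second_difference_bound d u Du x K2 _ h HK2 Hdep HD HLip).
    intros y Hy. apply (Hnear h); auto.
Qed.

Lemma second_difference_sq_trunc (d : nat) (u : (nat -> R) -> R) (x : nat -> R) : Ccinf d u ->
  exists K, 0 <= K /\ forall h, Rabs (u (vadd x h) - 2 * u x + u (vsub x h)) <= K * sq_trunc (vnorm d h).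
Proof.
  intros Hu. destruct (Ccinf_bounded d u Hu) as [M [HM HuM]].
  destruct (Ccinf_local_estimates d u x Hu) as [K1 [K2 [_ [HK2 [_ H2]]]]].
  pose proof (pos_INR d). pose proof (pow2_ge_0 (INR d)).
  exists (2 * K2 * INR d ^ 2 + 4 * M). split; [nra|]. intros h. unfold sq_trunc.
  destruct (Rlt_dec (vnorm d h) 1) as [Hlt|Hge].
  - eapply Rle_trans; [apply H2; auto|].
    pose proof (l1norm_le_vnorm d h). pose proof (l1norm_ge0 d h). pose proof (pow2_ge_0 (vnorm d h)).
    assert (l1norm d h ^ 2 <= INR d ^ 2 * vnorm d h ^ 2)
      by (rewrite <- Rpow_mult_distr; apply pow_incr; lra).
    nra.
  - rewrite Rmult_1_r.
    pose proof (HuM (vadd x h)). pose proof (HuM x). pose proof (HuM (vsub x h)).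
    assert (Rabs (u (vadd x h) - 2 * u x + u (vsub x h)) <=
              Rabs (u (vadd x h)) + 2 * Rabs (u x) + Rabs (u (vsub x h))).
    { unfold Rabs. destruct (Rcase_abs (u (vadd x h) - 2 * u x + u (vsub x h)));
        destruct (Rcase_abs (u (vadd x h))); destruct (Rcase_abs (u x));
        destruct (Rcase_abs (u (vsub x h))); lra. }
    nra.
Qed.

Lemma first_difference_sq_trunc (d : nat) (u : (nat -> R) -> R) (x : nat -> R) : Ccinf d u ->
  exists K, 0 <= K /\ forall h, (u (vadd x h) - u x) ^ 2 <= K * sq_trunc (vnorm d h).
Proof.
  intros Hu. destruct (Ccinf_bounded d u Hu) as [M [HM HuM]].
  destruct (Ccinf_local_estimates d u x Hu) as [K1 [K2 [HK1 [_ [H1 _]]]]].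
  pose proof (pos_INR d). pose proof (pow2_ge_0 (INR d)). pose proof (pow2_ge_0 K1).
  exists (K1 ^ 2 * INR d ^ 2 + 4 * M ^ 2). split; [pose proof (pow2_ge_0 M); nra|].
  intros h. unfold sq_trunc. rewrite <- (pow2_abs (u (vadd x h) - u x)).
  destruct (Rlt_dec (vnorm d h) 1) as [Hlt|Hge].
  - pose proof (l1norm_le_vnorm d h). pose proof (l1norm_ge0 d h). pose proof (pow2_ge_0 (vnorm d h)).
    assert (Habs : Rabs (u (vadd x h) - u x) <= K1 * INR d * vnorm d h).
    { eapply Rle_trans; [apply H1; auto|]. rewrite Rmult_assoc. apply Rmult_le_compat_l; auto. }
    assert (Rabs (u (vadd x h) - u x) ^ 2 <= (K1 * INR d * vnorm d h) ^ 2)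
      by (apply pow_incr; split; [apply Rabs_pos|auto]).
    pose proof (pow2_ge_0 M). nra.
  - rewrite Rmult_1_r.
    assert (Habs : Rabs (u (vadd x h) - u x) <= 2 * M).
    { unfold Rminus. eapply Rle_trans; [apply Rabs_triang|]. rewrite Rabs_Ropp.
      pose proof (HuM (vadd x h)). pose proof (HuM x). lra. }
    assert (Rabs (u (vadd x h) - u x) ^ 2 <= (2 * M) ^ 2)
      by (apply pow_incr; split; [apply Rabs_pos|auto]).
    nra.
Qed.

Definition lap_integrand (d : nat) (beta : R) (u : (nat -> R) -> R) (x h : nat -> R) : R :=
  (u (vadd x h) - 2 * u x + u (vsub x h)) / Rpower (vnorm d h) (INR d + beta).

Definition carre_integrand (d : nat) (beta : R) (u : (nat -> R) -> R) (x h : nat -> R) : R :=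
  (u (vadd x h) - u x) ^ 2 / Rpower (vnorm d h) (INR d + beta).

Definition gamma2_integrand (d : nat) (beta : R) (u : (nat -> R) -> R) (x w : nat -> R) : R :=
  let h := w in let s := fun i => w (d + i)%nat in
  (u (vadd (vadd x h) s) - u (vadd x h) - u (vadd x s) + u x) ^ 2
  / (Rpower (vnorm d h) (INR d + beta) * Rpower (vnorm d s) (INR d + beta)).

Lemma Lop_unfold (d : nat) (beta : R) (u : (nat -> R) -> R) (x : nat -> R) : Lop d beta u x =
  cbd beta d * (lint d (fun h => Rmax (lap_integrand d beta u x h) 0)
                - lint d (fun h => Rmax (- lap_integrand d beta u x h) 0)).
Proof. reflexivity. Qed.

Lemma GammaOp_unfold (d : nat) (beta : R) (u : (nat -> R) -> R) (x : nat -> R) :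
  GammaOp d beta u x = cbd beta d * lint d (carre_integrand d beta u x).
Proof. reflexivity. Qed.

Lemma Gamma2Op_unfold (d : nat) (beta : R) (u : (nat -> R) -> R) (x : nat -> R) :
  Gamma2Op d beta u x = cbd beta d ^ 2 * lint (d + d) (gamma2_integrand d beta u x).
Proof. reflexivity. Qed.

Lemma lower_sums_zero (n : nat) (f : (nat -> R) -> R) : (forall h, 0 <= f h) -> lower_sums n f 0.
Proof. intros H. exists nil. split; [split|]; simpl; auto. Qed.

Lemma lower_sums_bounded_dim0 (f : (nat -> R) -> R) : bound (lower_sums 0 f).
Proof.
  exists (f (fun _ => 0)). intros v [l [[_ Hv] ->]].
  rewrite (step_int_dim0 l (fun _ => 0)). apply Hv.
Qed.

Lemma Rmax_div_le (num P K q : R) : 0 < P -> Rabs num <= K * q ->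
  Rmax (num / P) 0 <= K * (q / P) /\ Rmax (- (num / P)) 0 <= K * (q / P).
Proof.
  intros HP Hn.
  assert (Habs : Rabs (num / P) <= K * (q / P)).
  { unfold Rdiv. rewrite Rabs_mult, (Rabs_right (/ P)) by (left; apply Rinv_0_lt_compat; auto).
    rewrite <- Rmult_assoc. apply Rmult_le_compat_r; auto. left; apply Rinv_0_lt_compat; auto. }
  pose proof (Rabs_pos (num / P)). pose proof (Rle_abs (num / P)).
  pose proof (Rle_abs (- (num / P))). rewrite Rabs_Ropp in *.
  split; apply Rmax_lub; lra.
Qed.

Lemma lap_integrand_bounded (d : nat) (beta : R) (u : (nat -> R) -> R) (x : nat -> R) :
  0 < beta < 2 -> Ccinf d u ->
  bound (lower_sums d (fun h => Rmax (lap_integrand d beta u x h) 0)) /\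
  bound (lower_sums d (fun h => Rmax (- lap_integrand d beta u x h) 0)).
Proof.
  intros Hb Hu. destruct d as [|d']; [split; apply lower_sums_bounded_dim0|].
  destruct (second_difference_sq_trunc (S d') u x Hu) as [K [HK Hnum]].
  split; apply (lower_sums_bounded_of_weight (S d') beta ltac:(lia) Hb _ K HK);
    intros h _; unfold lap_integrand, weight; apply Rmax_div_le; auto; apply Rpower_pos.
Qed.

Lemma carre_integrand_bounded (d : nat) (beta : R) (u : (nat -> R) -> R) (x : nat -> R) :
  0 < beta < 2 -> Ccinf d u -> bound (lower_sums d (carre_integrand d beta u x)).
Proof.
  intros Hb Hu. destruct d as [|d']; [apply lower_sums_bounded_dim0|].
  destruct (first_difference_sq_trunc (S d') u x Hu) as [K [HK Hnum]].
  apply (lower_sums_bounded_of_weight (S d') beta ltac:(lia) Hb _ K HK).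
  intros h _. unfold carre_integrand, weight, Rdiv. rewrite <- Rmult_assoc.
  apply Rmult_le_compat_r; auto. left. apply Rinv_0_lt_compat, Rpower_pos.
Qed.

(** * Behaviour of the integrands and operators under dilation *)

Lemma dilate_vadd (lam : R) (x h : nat -> R) : lam <> 0 ->
  dilate lam (vadd (dilate (/ lam) x) h) = vadd x (dilate lam h).
Proof. intros H. apply functional_extensionality. intros i. unfold dilate, vadd. field. auto. Qed.

Lemma dilate_vsub (lam : R) (x h : nat -> R) : lam <> 0 ->
  dilate lam (vsub (dilate (/ lam) x) h) = vsub x (dilate lam h).
Proof. intros H. apply functional_extensionality. intros i. unfold dilate, vsub. field. auto. Qed.

Lemma dilate_vadd2 (lam : R) (x h s : nat -> R) : lam <> 0 ->
  dilate lam (vadd (vadd (dilate (/ lam) x) h) s) = vadd (vadd x (dilate lam h)) (dilate lam s).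
Proof. intros H. apply functional_extensionality. intros i. unfold dilate, vadd. field. auto. Qed.

Lemma null_increment (d : nat) (u : (nat -> R) -> R) (y z h : nat -> R) (c : R) :
  depends_first d u -> vnorm d h = 0 -> (forall i, (i < d)%nat -> y i = z i + c * h i) -> u y = u z.
Proof.
  intros Hdep Hh Hyz. apply Hdep. intros i Hi. rewrite Hyz, (vnorm0_coords d h Hh i Hi) by auto. ring.
Qed.

(* Under [h = lam h'] each integrand picks up [lam^(d+beta)] per integration variable. *)
Lemma lap_integrand_dilate (d : nat) (beta : R) (u : (nat -> R) -> R) (x h : nat -> R) (lam : R) :
  0 < lam -> depends_first d u ->
  lap_integrand d beta (fun y => u (dilate lam y)) (dilate (/ lam) x) h
  = Rpower lam (INR d + beta) * lap_integrand d beta u x (dilate lam h).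
Proof.
  intros Hl Hdep. unfold lap_integrand.
  rewrite dilate_vadd, dilate_vsub, dilate_inv, vnorm_dilate by lra.
  destruct (vnorm_ge0 d h) as [Hr|Hr].
  - rewrite <- Rpower_mult_distr by auto.
    pose proof (Rpower_pos lam (INR d + beta)). pose proof (Rpower_pos (vnorm d h) (INR d + beta)).
    field. lra.
  - assert (H0 : vnorm d (dilate lam h) = 0) by (rewrite vnorm_dilate, <- Hr by auto; ring).
    rewrite (null_increment d u (vadd x (dilate lam h)) x _ 1 Hdep H0),
      (null_increment d u (vsub x (dilate lam h)) x _ (-1) Hdep H0)
      by (intros; unfold vadd, vsub; ring).
    unfold Rdiv. ring.
Qed.

Lemma carre_integrand_dilate (d : nat) (beta : R) (u : (nat -> R) -> R) (x h : nat -> R) (lam : R) :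
  0 < lam -> depends_first d u ->
  carre_integrand d beta (fun y => u (dilate lam y)) (dilate (/ lam) x) h
  = Rpower lam (INR d + beta) * carre_integrand d beta u x (dilate lam h).
Proof.
  intros Hl Hdep. unfold carre_integrand.
  rewrite dilate_vadd, dilate_inv, vnorm_dilate by lra.
  destruct (vnorm_ge0 d h) as [Hr|Hr].
  - rewrite <- Rpower_mult_distr by auto.
    pose proof (Rpower_pos lam (INR d + beta)). pose proof (Rpower_pos (vnorm d h) (INR d + beta)).
    field. lra.
  - assert (H0 : vnorm d (dilate lam h) = 0) by (rewrite vnorm_dilate, <- Hr by auto; ring).
    rewrite (null_increment d u (vadd x (dilate lam h)) x _ 1 Hdep H0) by (intros; unfold vadd; ring).
    unfold Rdiv. ring.
Qed.

Lemma gamma2_integrand_dilate (d : nat) (beta : R) (u : (nat -> R) -> R) (x w : nat -> R) (lam : R) :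
  0 < lam -> depends_first d u ->
  gamma2_integrand d beta (fun y => u (dilate lam y)) (dilate (/ lam) x) w
  = (Rpower lam (INR d + beta) * Rpower lam (INR d + beta)) * gamma2_integrand d beta u x (dilate lam w).
Proof.
  intros Hl Hdep. unfold gamma2_integrand. cbv zeta.
  set (s := fun i => w (d + i)%nat).
  change (fun i => dilate lam w (d + i)%nat) with (dilate lam s).
  rewrite dilate_vadd2, !dilate_vadd, dilate_inv, !vnorm_dilate by lra.
  set (h' := dilate lam w). set (s' := dilate lam s).
  destruct (vnorm_ge0 d w) as [Hw|Hw]; [destruct (vnorm_ge0 d s) as [Hs|Hs]|].
  - rewrite <- !Rpower_mult_distr by auto.
    pose proof (Rpower_pos lam (INR d + beta)).
    pose proof (Rpower_pos (vnorm d w) (INR d + beta)). pose proof (Rpower_pos (vnorm d s) (INR d + beta)).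
    field. split; lra.
  - assert (H0 : vnorm d s' = 0) by (unfold s'; rewrite vnorm_dilate, <- Hs by auto; ring).
    rewrite (null_increment d u (vadd (vadd x h') s') (vadd x h') s' 1 Hdep H0),
      (null_increment d u (vadd x s') x s' 1 Hdep H0) by (intros; unfold vadd; ring).
    unfold Rdiv. ring.
  - assert (H0 : vnorm d h' = 0) by (unfold h'; rewrite vnorm_dilate, <- Hw by auto; ring).
    rewrite (null_increment d u (vadd (vadd x h') s') (vadd x s') h' 1 Hdep H0),
      (null_increment d u (vadd x h') x h' 1 Hdep H0) by (intros; unfold vadd; ring).
    unfold Rdiv. ring.
Qed.

Lemma Rmax_scale (k y : R) : 0 < k -> Rmax (k * y) 0 = k * Rmax y 0.
Proof. intros Hk. unfold Rmax. destruct (Rle_dec (k * y) 0); destruct (Rle_dec y 0); try ring; nra. Qed.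

(* The Jacobian [lam^(-d)] of the change of variables against the homogeneity [lam^(d+beta)]. *)
Lemma dilation_factor (d : nat) (beta lam : R) : 0 < lam ->
  Rpower lam (INR d + beta) * (/ lam) ^ d = Rpower lam beta.
Proof.
  intros Hl. rewrite Rpower_plus, Rpower_pow by auto.
  replace (lam ^ d * Rpower lam beta * (/ lam) ^ d) with ((lam * / lam) ^ d * Rpower lam beta)
    by (rewrite Rpow_mult_distr; ring).
  rewrite Rinv_r, pow1 by lra. ring.
Qed.

Lemma lint_pos_part_dilate (n : nat) (g : (nat -> R) -> R) (k lam : R) : 0 < k -> 0 < lam ->
  bound (lower_sums n (fun h => Rmax (g h) 0)) ->
  lint n (fun h => Rmax (k * g (dilate lam h)) 0) = k * (/ lam) ^ n * lint n (fun h => Rmax (g h) 0).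
Proof.
  intros Hk Hl Hb. rewrite <- lint_dilate_bounded; auto.
  - f_equal. apply functional_extensionality. intros h. apply Rmax_scale. auto.
  - exists 0. apply lower_sums_zero. intros. apply Rmax_r.
Qed.

Lemma Lop_dilate (d : nat) (beta : R) (u : (nat -> R) -> R) (x : nat -> R) (lam : R) :
  0 < beta < 2 -> Ccinf d u -> 0 < lam ->
  Lop d beta (fun y => u (dilate lam y)) (dilate (/ lam) x) = Rpower lam beta * Lop d beta u x.
Proof.
  intros Hb Hu Hl. pose proof (proj1 Hu) as Hdep. rewrite !Lop_unfold.
  set (k := Rpower lam (INR d + beta)). assert (Hk : 0 < k) by apply Rpower_pos.
  destruct (lap_integrand_bounded d beta u x Hb Hu) as [Bpos Bneg].
  assert (Hpos : lint d (fun h => Rmax (lap_integrand d beta (fun y => u (dilate lam y)) (dilate (/ lam) x) h) 0)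
                 = k * (/ lam) ^ d * lint d (fun h => Rmax (lap_integrand d beta u x h) 0)).
  { rewrite <- (lint_pos_part_dilate d (lap_integrand d beta u x) k lam Hk Hl Bpos).
    f_equal. apply functional_extensionality. intros h. rewrite lap_integrand_dilate; auto. }
  assert (Hneg : lint d (fun h => Rmax (- lap_integrand d beta (fun y => u (dilate lam y)) (dilate (/ lam) x) h) 0)
                 = k * (/ lam) ^ d * lint d (fun h => Rmax (- lap_integrand d beta u x h) 0)).
  { rewrite <- (lint_pos_part_dilate d (fun h => - lap_integrand d beta u x h) k lam Hk Hl Bneg).
    f_equal. apply functional_extensionality. intros h. rewrite lap_integrand_dilate by auto.
    cbv beta. f_equal. unfold k. ring. }
  rewrite Hpos, Hneg, <- (dilation_factor d beta lam Hl). fold k. ring.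
Qed.

Lemma GammaOp_dilate (d : nat) (beta : R) (u : (nat -> R) -> R) (x : nat -> R) (lam : R) :
  0 < beta < 2 -> Ccinf d u -> 0 < lam ->
  GammaOp d beta (fun y => u (dilate lam y)) (dilate (/ lam) x) = Rpower lam beta * GammaOp d beta u x.
Proof.
  intros Hb Hu Hl. pose proof (proj1 Hu) as Hdep. rewrite !GammaOp_unfold.
  set (k := Rpower lam (INR d + beta)). assert (Hk : 0 < k) by apply Rpower_pos.
  replace (carre_integrand d beta (fun y => u (dilate lam y)) (dilate (/ lam) x))
    with (fun h => k * carre_integrand d beta u x (dilate lam h))
    by (apply functional_extensionality; intros h; rewrite carre_integrand_dilate; auto).
  rewrite lint_dilate_bounded; auto.
  - rewrite <- (dilation_factor d beta lam Hl). fold k. ring.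
  - apply carre_integrand_bounded; auto.
  - exists 0. apply lower_sums_zero. intros h. apply Rmult_le_pos; [apply pow2_ge_0|].
    left. apply Rinv_0_lt_compat, Rpower_pos.
Qed.

(* The integrand of [Gamma_2] is nonnegative, so [0] is one of its lower sums. *)
Lemma gamma2_integrand_ge0 (d : nat) (beta : R) (u : (nat -> R) -> R) (x w : nat -> R) :
  0 <= gamma2_integrand d beta u x w.
Proof.
  unfold gamma2_integrand, Rdiv. apply Rmult_le_pos; [apply pow2_ge_0|].
  left. apply Rinv_0_lt_compat, Rmult_lt_0_compat; apply Rpower_pos.
Qed.

Lemma gamma2_integrand_of_dilate (d : nat) (beta : R) (u : (nat -> R) -> R) (x : nat -> R) (lam : R) :
  0 < lam -> depends_first d u ->
  gamma2_integrand d beta (fun y => u (dilate lam y)) (dilate (/ lam) x)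
  = (fun w => (Rpower lam (INR d + beta) * Rpower lam (INR d + beta)) * gamma2_integrand d beta u x (dilate lam w)).
Proof. intros Hl Hdep. apply functional_extensionality. intros w. apply gamma2_integrand_dilate; auto. Qed.

Lemma Gamma2Op_dilate_bounded (d : nat) (beta : R) (u : (nat -> R) -> R) (x : nat -> R) (lam : R) :
  Ccinf d u -> 0 < lam -> bound (lower_sums (d + d) (gamma2_integrand d beta u x)) ->
  Gamma2Op d beta (fun y => u (dilate lam y)) (dilate (/ lam) x) = Rpower lam beta ^ 2 * Gamma2Op d beta u x.
Proof.
  intros Hu Hl Hb. rewrite !Gamma2Op_unfold, gamma2_integrand_of_dilate by (auto; apply Hu).
  pose proof (Rpower_pos lam (INR d + beta)).
  rewrite lint_dilate_bounded; auto; [|nra|exists 0; apply lower_sums_zero, gamma2_integrand_ge0].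
  rewrite <- (dilation_factor d beta lam Hl), pow_add. ring.
Qed.

Lemma Gamma2Op_dilate_unbounded (d : nat) (beta : R) (u : (nat -> R) -> R) (x : nat -> R) (lam : R) :
  Ccinf d u -> 0 < lam -> ~ bound (lower_sums (d + d) (gamma2_integrand d beta u x)) ->
  Gamma2Op d beta (fun y => u (dilate lam y)) (dilate (/ lam) x) = Gamma2Op d beta u x.
Proof.
  intros Hu Hl Hb. rewrite !Gamma2Op_unfold, gamma2_integrand_of_dilate by (auto; apply Hu).
  pose proof (Rpower_pos lam (INR d + beta)). rewrite lint_dilate_unbounded; auto. nra.
Qed.

Lemma CD_dilated (beta kappa N : R) (d : nat) (u : (nat -> R) -> R) (x : nat -> R) (lam : R) :
  0 < beta < 2 -> Ccinf d u -> 0 < lam ->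
  (forall v, Ccinf d v -> forall y : nat -> R,
     / N * (Lop d beta v y) ^ 2 <= Gamma2Op d beta v y + kappa * GammaOp d beta v y) ->
  / N * (Rpower lam beta * Lop d beta u x) ^ 2 <=
  Gamma2Op d beta (fun y => u (dilate lam y)) (dilate (/ lam) x) + kappa * (Rpower lam beta * GammaOp d beta u x).
Proof.
  intros Hb Hu Hl HCD. rewrite <- Lop_dilate, <- GammaOp_dilate by auto.
  apply HCD, Ccinf_dilate; auto.
Qed.

Lemma Rpower_onto (beta s : R) : 0 < beta -> 0 < s -> exists lam, 0 < lam /\ Rpower lam beta = s.
Proof.
  intros Hb Hs. exists (Rpower s (/ beta)). split; [apply Rpower_pos|].
  rewrite Rpower_mult, Rinv_l by lra. apply Rpower_1. auto.
Qed.

(* Letting [s -> +oo] in [X s^2 <= Y s^2 + Z s]. *)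
Lemma le_of_quadratic_bound (X Y Z : R) : (forall s, 0 < s -> X * s ^ 2 <= Y * s ^ 2 + Z * s) -> X <= Y.
Proof.
  intros H. destruct (Rle_dec X Y) as [|Hn]; auto. exfalso. apply Rnot_le_lt in Hn.
  set (s := (Rabs Z + 1) / (X - Y)).
  assert (Hs : 0 < s) by (unfold s; apply Rdiv_lt_0_compat; [pose proof (Rabs_pos Z)|]; lra).
  specialize (H s Hs).
  assert (H2 : (X - Y) * s <= Z) by (apply Rmult_le_reg_r with s; auto; simpl in H; nra).
  assert (E : (X - Y) * s = Rabs Z + 1) by (unfold s; field; lra).
  pose proof (Rle_abs Z). lra.
Qed.

(* Letting [s -> +oo] and then [s -> 0] in [X s^2 <= E + Z s], with [X >= 0]. *)
Lemma le_of_quadratic_affine_bound (X E Z : R) : 0 <= X ->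
  (forall s, 0 < s -> X * s ^ 2 <= E + Z * s) -> X <= E.
Proof.
  intros HX H. pose proof (Rabs_pos E). pose proof (Rabs_pos Z).
  pose proof (Rle_abs E). pose proof (Rle_abs Z).
  assert (HX0 : X = 0).
  { destruct HX as [HX| <-]; auto. exfalso.
    set (s := (Rabs E + Rabs Z + 1) / X + 1).
    assert (Hq : 0 < (Rabs E + Rabs Z + 1) / X) by (apply Rdiv_lt_0_compat; lra).
    assert (Hs : 1 <= s) by (unfold s; lra).
    specialize (H s ltac:(lra)).
    assert (Es : X * s = Rabs E + Rabs Z + 1 + X) by (unfold s; field; lra).
    assert (Rabs E * 1 <= Rabs E * s) by (apply Rmult_le_compat_l; lra).
    assert (Z * s <= Rabs Z * s) by (apply Rmult_le_compat_r; lra).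
    nra. }
  subst X. destruct (Rle_dec 0 E) as [|Hn]; auto. exfalso. apply Rnot_le_lt in Hn.
  set (s := - E / (2 * (Rabs Z + 1))).
  assert (Hs : 0 < s) by (unfold s; apply Rdiv_lt_0_compat; lra).
  specialize (H s Hs).
  assert (Es : (Rabs Z + 1) * s = - E / 2) by (unfold s; field; lra).
  assert (Z * s <= Rabs Z * s) by (apply Rmult_le_compat_r; lra).
  nra.
Qed.

Theorem proposition2p3 (beta kappa N : R) (d : nat)
  (hbeta : 0 < beta < 2) (hN : 0 < N)
  (hCD : forall u, Ccinf d u -> forall x : nat -> R,
     / N * (Lop d beta u x) ^ 2 <= Gamma2Op d beta u x + kappa * GammaOp d beta u x) :
  forall u, Ccinf d u -> forall x : nat -> R,
     / N * (Lop d beta u x) ^ 2 <= Gamma2Op d beta u x.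
Proof.
  intros u Hu x.
  set (X := / N * (Lop d beta u x) ^ 2).
  assert (Hscaled : forall s, 0 < s -> exists lam, 0 < lam /\ Rpower lam beta = s /\ X * s ^ 2 <=
            Gamma2Op d beta (fun y => u (dilate lam y)) (dilate (/ lam) x) + kappa * GammaOp d beta u x * s).
  { intros s Hs. destruct (Rpower_onto beta s) as [lam [Hl <-]]; [lra|auto|].
    exists lam. repeat split; auto. pose proof (CD_dilated beta kappa N d u x lam hbeta Hu Hl hCD).
    unfold X. nra. }
  destruct (classic (bound (lower_sums (d + d) (gamma2_integrand d beta u x)))) as [Hb|Hb].
  - apply (le_of_quadratic_bound X _ (kappa * GammaOp d beta u x)). intros s Hs.
    destruct (Hscaled s Hs) as [lam [Hl [Hlam Hineq]]].
    rewrite Gamma2Op_dilate_bounded, Hlam in Hineq by auto. lra.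
  - apply (le_of_quadratic_affine_bound X _ (kappa * GammaOp d beta u x)).
    + unfold X. apply Rmult_le_pos; [left; apply Rinv_0_lt_compat; auto|apply pow2_ge_0].
    + intros s Hs. destruct (Hscaled s Hs) as [lam [Hl [_ Hineq]]].
      rewrite Gamma2Op_dilate_unbounded in Hineq by auto. lra.
Qed.
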